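(* Assume (A1). Let $f_*\in\mathcal H_K$, let $\theta\in(0,1)$ with $\theta>\frac{q}{q+1}$, and let $\eta_t=\eta_1t^{-\theta}$ with $\eta_1$ satisfying (R1). Let $T\ge2$. Then $$\mathcal{E}_{\mathbf z}(f_T)-\mathcal{E}_{\mathbf z}(f_* )\le\Big(\frac{\|f_*\|_K^2}{2\eta_1}+c'_\theta\,\mathcal{E}_{\mathbf z}(f_* )+\widetilde C_1\Big)\Lambda_T+\frac{T^\theta}{2\eta_1}\sum_{k=1}^{T-1}\frac{1}{k+1}\Big[\frac1k\sum_{t=T-k+1}^T2\eta_t-2\eta_{T-k}\Big]\big\{\mathcal{E}_{\mathbf z}(f_{T-k})-\mathcal{E}_{\mathbf z}(f_* )\big\},$$ where $c'_\theta=\frac{1}{1-\theta}\Big(1+\max_{t\in\mathbb N}(2+\log4)(1+\log t)t^{-\theta}\Big)$ and $\widetilde C_1>0$ is a constant depending only on $q,\kappa,\theta,\eta_1,c_q$ (not on $T$, $m$, $\mathbf z$ or $f_*$).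
   Context: Setting. $X$ is a separable metric space, $Y\subseteq\mathbb{R}$, and $V:\mathbb{R}\times\mathbb{R}\to[0,\infty)$ is a measurable loss, convex in its second argument; $V'_-(y,a)$ denotes the left derivative of $a\mapsto V(y,a)$. A sample $\mathbf{z}=\{(x_i,y_i)\}_{i=1}^m\subset X\times Y$ is given, and $\mathcal{E}_{\mathbf z}(f)=\frac1m\sum_{i=1}^m V(y_i,f(x_i))$ is the empirical risk. $K:X\times X\to\mathbb{R}$ is a reproducing kernel with reproducing kernel Hilbert space $(\mathcal{H}_K,\|\cdot\|_K)$, $K_x=K(x,\cdot)$. Given step sizes $\eta_t>0$, the iterates are $f_1=0$ and $f_{t+1}=f_t-\eta_t\frac1m\sum_{j=1}^m V'_-(y_j,f_t(x_j))K_{x_j}$ for $t=1,\dots,T$. Assumption (A1) (parts used): $\kappa:=\sup_{x\in X}\sqrt{K(x,x)}<\infty$, $|V|_0:=\sup_{y\in Y}V(y,0)<\infty$, and there are $q\ge 0$, $c_q>0$ with $|V'_-(y,a)|\le c_q(1+|a|^q)$ for all $a\in\mathbb{R}$, $y\in Y$. Step-size condition (R1): $0<\eta_1\le\min\Big\{\frac{\sqrt{1-\theta}}{\sqrt2\,c_q(\kappa+1)^{q+1}},\ \frac{1-\theta}{4|V|_0}\Big\}$. Rate $\Lambda_T$: $\Lambda_T=T^{-(1-\theta)}$ if $\theta>\frac{q+1}{q+2}$; $\Lambda_T=(\log T)T^{-(1-\theta)}$ if $\theta=\frac{q+1}{q+2}$; $\Lambda_T=(\log T)T^{-(\theta(1+q)-q)}$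 if $\theta<\frac{q+1}{q+2}$. *)

From Stdlib Require Import Reals Lra Lia.
Open Scope R_scope.

(* A real inner-product space (pre-Hilbert space).  The RKHS H_K is an
   instance (with feature map x |-> K_x). *)
Record InnerSpace := {
  vcar :> Type;
  vzero : vcar;
  vadd : vcar -> vcar -> vcar;
  vopp : vcar -> vcar;
  vscal : R -> vcar -> vcar;
  inner : vcar -> vcar -> R;
  vadd_assoc : forall u v w, vadd u (vadd v w) = vadd (vadd u v) w;
  vadd_comm : forall u v, vadd u v = vadd v u;
  vadd_0 : forall u, vadd u vzero = u;
  vadd_opp : forall u, vadd u (vopp u) = vzero;
  vscal_assoc : forall a b u, vscal a (vscal b u) = vscal (a * b) u;
  vscal_1 : forall u, vscal 1 u = u;
  vscal_distr_v : forall a u v, vscal a (vadd u v) = vadd (vscal a u) (vscal a v);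
  vscal_distr_s : forall a b u, vscal (a + b) u = vadd (vscal a u) (vscal b u);
  inner_sym : forall u v, inner u v = inner v u;
  inner_add_l : forall u v w, inner (vadd u v) w = inner u w + inner v w;
  inner_scal_l : forall a u v, inner (vscal a u) v = a * inner u v;
  inner_pos : forall u, 0 <= inner u u;
  inner_def : forall u, inner u u = 0 -> u = vzero
}.

Arguments vzero {_}.
Arguments vadd {_}.
Arguments vopp {_}.
Arguments vscal {_}.
Arguments inner {_}.

Fixpoint sumR (n : nat) (F : nat -> R) : R :=
  match n with O => 0 | S n' => sumR n' F + F n' end.

Fixpoint vsum {H : InnerSpace} (n : nat) (F : nat -> H) : H :=
  match n with O => vzero | S n' => vadd (vsum n' F) (F n') end.

(* x^q for x >= 0 and real q >= 0, with 0^0 = 1 and 0^q = 0 for q > 0 *)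
Definition powr (x q : R) : R :=
  if Req_EM_T x 0 then (if Req_EM_T q 0 then 1 else 0) else Rpower x q.

Definition is_left_deriv (g : R -> R) (a l : R) : Prop :=
  forall eps, 0 < eps -> exists delta, 0 < delta /\
    forall h, 0 < h < delta -> Rabs ((g a - g (a - h)) / h - l) < eps.

(* evaluation f(x) = <f, K_x> (reproducing property) *)
Definition evalH {X : Type} {H : InnerSpace} (Kx : X -> H) (f : H) (x : X) : R :=
  inner f (Kx x).

Definition emp_risk {X : Type} {H : InnerSpace} (Kx : X -> H)
  (V : R -> R -> R) (m : nat) (xs : nat -> X) (ys : nat -> R) (f : H) : R :=
  / INR m * sumR m (fun i => V (ys i) (evalH Kx f (xs i))).

(* gradient-descent iterates: gd 1 = 0,
   gd (t+1) = gd t - eta t * (1/m) sum_j V'_-(y_j, (gd t)(x_j)) K_{x_j};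
   gd 0 := 0 is an unused dummy value. *)
Fixpoint gd {X : Type} {H : InnerSpace} (Kx : X -> H) (Vd : R -> R -> R)
  (m : nat) (xs : nat -> X) (ys : nat -> R) (eta : nat -> R) (t : nat) : H :=
  match t with
  | O => vzero
  | S t' =>
      match t' with
      | O => vzero
      | _ => let ft := gd Kx Vd m xs ys eta t' in
             vadd ft (vscal (- (eta t' * / INR m))
               (vsum m (fun j => vscal (Vd (ys j) (evalH Kx ft (xs j))) (Kx (xs j)))))
      end
  end.

Definition LambdaT (q theta : R) (T : nat) : R :=
  if Rlt_dec ((q + 1) / (q + 2)) theta then Rpower (INR T) (- (1 - theta))
  else if Req_EM_T theta ((q + 1) / (q + 2)) then ln (INR T) * Rpower (INR T) (- (1 - theta))
  else ln (INR T) * Rpower (INR T) (- (theta * (1 + q) - q)).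

(* the function t |-> (2 + log 4)(1 + log t) t^{-theta} whose max over t in N
   (t >= 1) enters c'_theta *)
Definition cth_fun (theta : R) (t : nat) : R :=
  (2 + ln 4) * (1 + ln (INR t)) * Rpower (INR t) (- theta).

(** Since the left derivative of a convex loss is a subgradient,
    one gradient step gives, for every comparison function [g],
    [|f_(t+1) - g|^2 <= |f_t - g|^2 + 2 eta_t (E g - E f_t) + |f_(t+1) - f_t|^2].
    The growth condition on [V'_-] and (R1) first give, by induction on [t],
    [|f_t|^2 <= B t^(1-theta)], hence [|f_(t+1) - f_t|^2 <= C t^(-beta)] with
    [beta = 2 theta - q (1 - theta) > theta].  Summing the one-step inequality
    over suffixes [s..T] (with [g = f_s]) and over [1..T] (with [g = f_*]) and
    combining these averages as in Shamir and Zhang's last-iterate argument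
    leaves the stated weighted sum plus terms of order
    [T^theta (T^(-1) sum_t t^(-beta) + sum_k (T-k)^(-beta) / k)], which is [O(Lambda_T)]. *)

From Stdlib Require Import Reals Lra Lia Psatz.
Open Scope R_scope.

Lemma sumR_succ n F : sumR (S n) F = sumR n F + F n.
Proof. reflexivity. Qed.

Lemma sumR_ext n F G : (forall i, (i < n)%nat -> F i = G i) -> sumR n F = sumR n G.
Proof.
  revert F G; induction n as [|n IH]; intros F G HFG; simpl; [reflexivity|].
  rewrite (IH F G), HFG; auto; intros; apply HFG; lia.
Qed.

Lemma sumR_le n F G : (forall i, (i < n)%nat -> F i <= G i) -> sumR n F <= sumR n G.
Proof.
  revert F G; induction n as [|n IH]; intros F G HFG; simpl; [lra|].
  apply Rplus_le_compat; [apply IH; intros|]; apply HFG; lia.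
Qed.

Lemma sumR_scal n c F : sumR n (fun i => c * F i) = c * sumR n F.
Proof. induction n as [|n IH]; simpl; [ring | rewrite IH; ring]. Qed.

Lemma sumR_plus n F G : sumR n (fun i => F i + G i) = sumR n F + sumR n G.
Proof. induction n as [|n IH]; simpl; [ring | rewrite IH; ring]. Qed.

Lemma sumR_minus n F G : sumR n (fun i => F i - G i) = sumR n F - sumR n G.
Proof. induction n as [|n IH]; simpl; [ring | rewrite IH; ring]. Qed.

Lemma sumR_const n c : sumR n (fun _ => c) = INR n * c.
Proof. induction n as [|n IH]; simpl sumR; [simpl; ring | rewrite IH, S_INR; ring]. Qed.

Lemma sumR_shift n F : sumR (S n) F = F 0%nat + sumR n (fun i => F (S i)).
Proof. induction n as [|n IH]; simpl in *; [ring | rewrite IH; ring]. Qed.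

Lemma sumR_rev n F : sumR n (fun i => F (n - 1 - i)%nat) = sumR n F.
Proof.
  revert F; induction n as [|n IH]; intros F; [reflexivity|].
  rewrite sumR_shift, sumR_succ, <- IH, Nat.sub_0_r, Nat.sub_1_r, Rplus_comm.
  f_equal; apply sumR_ext; intros; f_equal; lia.
Qed.

Lemma sumR_nonneg n F : (forall i, (i < n)%nat -> 0 <= F i) -> 0 <= sumR n F.
Proof.
  intros HF. apply Rle_trans with (sumR n (fun _ => 0)); [|apply sumR_le; auto].
  rewrite sumR_const; lra.
Qed.

Lemma sumR_le_const n F c : (forall i, (i < n)%nat -> F i <= c) -> sumR n F <= INR n * c.
Proof. intros. rewrite <- sumR_const. apply sumR_le; auto. Qed.

Section InnerSpaceFacts.
Variable H : InnerSpace.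
Implicit Types u v w : H.

Lemma inner_add_r u v w : inner u (vadd v w) = inner u v + inner u w.
Proof. rewrite inner_sym, inner_add_l, (inner_sym _ v u), (inner_sym _ w u). ring. Qed.

Lemma inner_scal_r a u v : inner u (vscal a v) = a * inner u v.
Proof. rewrite inner_sym, inner_scal_l, inner_sym. ring. Qed.

Lemma inner_zero_l v : inner vzero v = 0.
Proof. pose proof (inner_add_l H vzero vzero v) as E. rewrite vadd_0 in E. lra. Qed.

Lemma inner_zero_r v : inner v vzero = 0.
Proof. rewrite inner_sym. apply inner_zero_l. Qed.

Lemma inner_vsum_r n (F : nat -> H) v :
  inner v (vsum n F) = sumR n (fun j => inner v (F j)).
Proof.
  induction n as [|n IH]; simpl; [apply inner_zero_r|]. rewrite inner_add_r, IH. reflexivity.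
Qed.

Lemma inner_add_add u w :
  inner (vadd u w) (vadd u w) = inner u u + 2 * inner u w + inner w w.
Proof. rewrite inner_add_l, !inner_add_r, (inner_sym _ w u). ring. Qed.

Lemma two_inner_le u v n : 0 < n -> 2 * inner u v <= inner u u / n + n * inner v v.
Proof.
  intros Hn. pose proof (inner_pos H (vadd u (vscal (- n) v))) as P.
  rewrite inner_add_add, inner_scal_r, inner_scal_l, inner_scal_r in P.
  apply Rmult_le_reg_l with n; auto.
  replace (n * (inner u u / n + n * inner v v)) with (inner u u + n * n * inner v v)
    by (field; lra).
  nra.
Qed.

Lemma cauchy_schwarz u v : (inner u v) ^ 2 <= inner u u * inner v v.
Proof.
  pose proof (inner_pos H v) as Hv.
  destruct (Req_dec (inner v v) 0) as [E|E].
  - apply inner_def in E. subst v. rewrite !inner_zero_r. simpl. lra.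
  - set (l := inner u v / inner v v).
    pose proof (inner_pos H (vadd u (vscal (- l) v))) as P.
    rewrite inner_add_add, inner_scal_r, inner_scal_l, inner_scal_r in P.
    replace (inner u u + 2 * (- l * inner u v) + - l * (- l * inner v v))
      with (inner u u - inner u v ^ 2 / inner v v) in P by (unfold l; field; lra).
    apply Rmult_le_reg_r with (/ inner v v); [apply Rinv_0_lt_compat; lra|].
    replace (inner u u * inner v v * / inner v v) with (inner u u) by (field; lra).
    unfold Rdiv in P. lra.
Qed.

Lemma inner_vsum_le n (F : nat -> H) :
  inner (vsum n F) (vsum n F) <= INR n * sumR n (fun j => inner (F j) (F j)).
Proof.
  induction n as [|n IH]; simpl vsum; simpl sumR.
  - rewrite inner_zero_l. simpl; lra.
  - rewrite inner_add_add. destruct n as [|n].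
    + simpl vsum. rewrite !inner_zero_l. simpl. lra.
    + assert (Hn : 0 < INR (S n)) by (apply lt_0_INR; lia).
      pose proof (two_inner_le (vsum (S n) F) (F (S n)) (INR (S n)) Hn) as Young.
      pose proof (inner_pos H (F (S n))).
      rewrite S_INR with (n := S n).
      set (A := inner (vsum (S n) F) (vsum (S n) F)) in *.
      set (Sm := sumR (S n) (fun j => inner (F j) (F j))) in *.
      assert (0 <= Sm) by (apply sumR_nonneg; intros; apply inner_pos).
      assert (A / INR (S n) <= Sm).
      { apply Rmult_le_reg_l with (INR (S n)); auto.
        replace (INR (S n) * (A / INR (S n))) with A by (field; lra). lra. }
      nra.
Qed.

(* [sqdist g u] is [|u - g|^2], expanded so that no subtraction in [H] is needed. *)
Definition sqdist (g u : H) : R := inner u u - 2 * inner u g + inner g g.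

Lemma sqdist_nonneg g u : 0 <= sqdist g u.
Proof.
  pose proof (two_inner_le u g 1 Rlt_0_1) as Young. unfold sqdist.
  replace (inner u u / 1 + 1 * inner g g) with (inner u u + inner g g) in Young by field.
  lra.
Qed.

Lemma sqdist_refl g : sqdist g g = 0.
Proof. unfold sqdist. ring. Qed.

Lemma sqdist_zero g : sqdist g vzero = inner g g.
Proof. unfold sqdist. rewrite !inner_zero_l. ring. Qed.

End InnerSpaceFacts.

(** * Convex functions of a real variable *)

Definition convexR (g : R -> R) : Prop :=
  forall a b l, 0 <= l <= 1 -> g (l * a + (1 - l) * b) <= l * g a + (1 - l) * g b.

Section LeftDerivative.
Variables (g : R -> R) (a d : R).
Hypothesis g_convex : convexR g.
Hypothesis g_left_deriv : is_left_deriv g a d.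

(* Chord slopes of a convex function increase, and [d] is their limit from the left. *)
Lemma left_deriv_subgrad_lt b : b < a -> g a - g b <= d * (a - b).
Proof.
  intros Hb.
  assert (Chord : forall h, 0 < h <= a - b -> (g a - g b) * h <= (g a - g (a - h)) * (a - b)).
  { intros h Hh. set (l := h / (a - b)).
    assert (Hl : 0 <= l <= 1).
    { unfold l; split; [apply Rmult_le_pos; [lra | left; apply Rinv_0_lt_compat; lra]|].
      apply Rmult_le_reg_r with (a - b); [lra|]. unfold Rdiv. rewrite Rmult_assoc, Rinv_l; lra. }
    pose proof (g_convex b a l Hl) as C.
    replace (l * b + (1 - l) * a) with (a - h) in C by (unfold l; field; lra).
    assert (l * (a - b) = h) by (unfold l; field; lra).
    nra. }
  destruct (Rle_dec ((g a - g b) / (a - b)) d) as [Hle|Hgt].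
  - apply Rmult_le_reg_r with (/ (a - b)); [apply Rinv_0_lt_compat; lra|].
    replace (d * (a - b) * / (a - b)) with d by (field; lra). exact Hle.
  - exfalso. set (s := (g a - g b) / (a - b)) in *.
    destruct (g_left_deriv (s - d)) as [delta [Hdel Hh]]; [lra|].
    set (h := Rmin (delta / 2) (a - b)).
    assert (H1 : 0 < h < delta).
    { unfold h. split; [apply Rmin_glb_lt; lra|].
      apply Rle_lt_trans with (delta / 2); [apply Rmin_l | lra]. }
    assert (H2 : h <= a - b) by (unfold h; apply Rmin_r).
    specialize (Hh h H1). specialize (Chord h (conj (proj1 H1) H2)).
    assert (Q : s <= (g a - g (a - h)) / h).
    { apply Rmult_le_reg_r with (h * (a - b)); [nra|].
      replace (s * (h * (a - b))) with ((g a - g b) * h) by (unfold s; field; lra).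
      replace ((g a - g (a - h)) / h * (h * (a - b))) with ((g a - g (a - h)) * (a - b))
        by (field; lra).
      exact Chord. }
    apply Rabs_def2 in Hh. lra.
Qed.

Lemma left_deriv_subgrad_gt b : a < b -> d * (b - a) <= g b - g a.
Proof.
  intros Hb.
  assert (Chord : forall h, 0 < h -> (g a - g (a - h)) * (b - a) <= (g b - g a) * h).
  { intros h Hh. set (l := (b - a) / (b - a + h)).
    assert (Hl : 0 <= l <= 1).
    { unfold l; split; [apply Rmult_le_pos; [lra | left; apply Rinv_0_lt_compat; lra]|].
      apply Rmult_le_reg_r with (b - a + h); [lra|]. unfold Rdiv. rewrite Rmult_assoc, Rinv_l; lra. }
    pose proof (g_convex (a - h) b l Hl) as C.
    replace (l * (a - h) + (1 - l) * b) with a in C by (unfold l; field; lra).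
    assert (E1 : l * (b - a + h) = b - a) by (unfold l; field; lra).
    assert (E2 : (1 - l) * (b - a + h) = h) by (unfold l; field; lra).
    assert (C2 : g a * (b - a + h) <= (l * g (a - h) + (1 - l) * g b) * (b - a + h))
      by (apply Rmult_le_compat_r; lra).
    replace ((l * g (a - h) + (1 - l) * g b) * (b - a + h))
      with (l * (b - a + h) * g (a - h) + (1 - l) * (b - a + h) * g b) in C2 by ring.
    rewrite E1, E2 in C2. nra. }
  destruct (Rle_dec d ((g b - g a) / (b - a))) as [Hle|Hgt].
  - apply Rmult_le_reg_r with (/ (b - a)); [apply Rinv_0_lt_compat; lra|].
    replace (d * (b - a) * / (b - a)) with d by (field; lra). exact Hle.
  - exfalso. set (s := (g b - g a) / (b - a)) in *.
    destruct (g_left_deriv (d - s)) as [delta [Hdel Hh]]; [lra|].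
    assert (H1 : 0 < delta / 2 < delta) by lra.
    specialize (Hh (delta / 2) H1). specialize (Chord (delta / 2) (proj1 H1)).
    assert (Q : (g a - g (a - delta / 2)) / (delta / 2) <= s).
    { apply Rmult_le_reg_r with (delta / 2 * (b - a)); [nra|].
      replace ((g a - g (a - delta / 2)) / (delta / 2) * (delta / 2 * (b - a)))
        with ((g a - g (a - delta / 2)) * (b - a)) by (field; lra).
      replace (s * (delta / 2 * (b - a))) with ((g b - g a) * (delta / 2))
        by (unfold s; field; lra).
      exact Chord. }
    apply Rabs_def2 in Hh. lra.
Qed.

Lemma left_deriv_subgrad b : g a + d * (b - a) <= g b.
Proof.
  destruct (Rtotal_order b a) as [Hb|[Hb|Hb]].
  - pose proof (left_deriv_subgrad_lt b Hb). lra.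
  - subst. lra.
  - pose proof (left_deriv_subgrad_gt b Hb). lra.
Qed.

End LeftDerivative.

Lemma Rpower_pos x y : 0 < Rpower x y.
Proof. apply exp_pos. Qed.

Lemma Rpower_1_l y : Rpower 1 y = 1.
Proof. unfold Rpower. rewrite ln_1, Rmult_0_r. apply exp_0. Qed.

Lemma Rpower_2 x : 0 < x -> Rpower x 2 = x ^ 2.
Proof. intros. replace 2 with (INR 2) by (simpl; ring). apply Rpower_pow; auto. Qed.

Lemma Rpower_sqr x c : Rpower x c * Rpower x c = Rpower x (2 * c).
Proof. rewrite <- Rpower_plus. f_equal. ring. Qed.

Lemma Rpower_mul_opp x a : 0 < x -> Rpower x a * Rpower x (- a) = 1.
Proof. intros. rewrite <- Rpower_plus, Rplus_opp_r. apply Rpower_O; auto. Qed.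

Lemma Rpower_div_self x a : 0 < x -> Rpower x a / x = Rpower x (a - 1).
Proof. intros. unfold Rminus. rewrite Rpower_plus, Rpower_Ropp, Rpower_1 by auto. reflexivity. Qed.

Lemma Rpower_opp_div x b : 0 < x -> Rpower x (- b) = Rpower x (1 - b) / x.
Proof. intros. rewrite Rpower_div_self by auto. f_equal. ring. Qed.

Lemma Rpower_ge_1 x c : 1 <= x -> 0 <= c -> 1 <= Rpower x c.
Proof. intros. rewrite <- (Rpower_O x) by lra. apply Rle_Rpower; auto. Qed.

Lemma Rpower_le_1 x c : 1 <= x -> c <= 0 -> Rpower x c <= 1.
Proof. intros. rewrite <- (Rpower_O x) by lra. apply Rle_Rpower; auto. Qed.

Lemma Rpower_opp_antimono x y c : 0 < x <= y -> 0 <= c -> Rpower y (- c) <= Rpower x (- c).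
Proof.
  intros. rewrite !Rpower_Ropp. apply Rinv_le_contravar; [apply Rpower_pos|].
  apply Rle_Rpower_l; lra.
Qed.

Lemma Rpower_opp_div2 x b : 0 < x -> Rpower (x / 2) (- b) = Rpower 2 b * Rpower x (- b).
Proof.
  intros. unfold Rpower. rewrite <- exp_plus. f_equal.
  unfold Rdiv. rewrite ln_mult, ln_Rinv by lra. ring.
Qed.

Lemma Rabs_le_of_sq_le a M : 0 <= M -> a ^ 2 <= M ^ 2 -> Rabs a <= M.
Proof.
  intros HM Ha. destruct (Rle_dec (Rabs a) M) as [h|h]; auto.
  pose proof (pow2_abs a). nra.
Qed.

Lemma INR_succ_ge_1 n : 1 <= INR (S n).
Proof. rewrite S_INR. pose proof (pos_INR n). lra. Qed.

Lemma ln_le_sub_1 x : 0 < x -> ln x <= x - 1.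
Proof. intros. pose proof (exp_ineq1_le (ln x)) as E. rewrite exp_ln in E; lra. Qed.

Lemma ln_le_Rpower_div x e : 0 < x -> 0 < e -> ln x <= Rpower x e / e.
Proof.
  intros Hx He. pose proof (ln_le_sub_1 (Rpower x e) (Rpower_pos _ _)) as A.
  rewrite ln_Rpower in A.
  apply Rmult_le_reg_l with e; auto.
  replace (e * (Rpower x e / e)) with (Rpower x e) by (field; lra). lra.
Qed.

Lemma ln_ge_1 x : 3 <= x -> 1 <= ln x.
Proof.
  intros Hx. destruct (Rle_dec 1 (ln x)) as [h|h]; auto. exfalso.
  assert (exp (ln x) < exp 1) by (apply exp_increasing; lra).
  rewrite exp_ln in H by lra. pose proof exp_le_3. lra.
Qed.

(* Tangent lines lie below [exp]. *)
Lemma exp_convexR : convexR exp.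
Proof.
  intros u v p Hp. set (w := p * u + (1 - p) * v).
  assert (Eu : exp u = exp w * exp (u - w)) by (rewrite <- exp_plus; f_equal; ring).
  assert (Ev : exp v = exp w * exp (v - w)) by (rewrite <- exp_plus; f_equal; ring).
  pose proof (exp_ineq1_le (u - w)). pose proof (exp_ineq1_le (v - w)).
  pose proof (exp_pos w).
  rewrite Eu, Ev.
  assert (p * (exp w * (1 + (u - w))) <= p * (exp w * exp (u - w)))
    by (apply Rmult_le_compat_l; [lra|]; apply Rmult_le_compat_l; lra).
  assert ((1 - p) * (exp w * (1 + (v - w))) <= (1 - p) * (exp w * exp (v - w)))
    by (apply Rmult_le_compat_l; [lra|]; apply Rmult_le_compat_l; lra).
  assert (p * (exp w * (1 + (u - w))) + (1 - p) * (exp w * (1 + (v - w))) = exp w)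
    by (unfold w; ring).
  lra.
Qed.

Lemma Rpower_le_bernoulli r p : 0 < r -> 0 <= p <= 1 -> Rpower r p <= 1 + p * (r - 1).
Proof.
  intros Hr Hp. unfold Rpower.
  replace (p * ln r) with (p * ln r + (1 - p) * 0) by ring.
  eapply Rle_trans; [apply exp_convexR; auto|].
  rewrite exp_ln, exp_0 by auto. lra.
Qed.

Lemma bernoulli_le_Rpower r p : 0 < r -> p <= 0 -> 1 + p * (r - 1) <= Rpower r p.
Proof.
  intros Hr Hp. unfold Rpower.
  pose proof (exp_ineq1_le (p * ln r)). pose proof (ln_le_sub_1 r Hr).
  assert (p * (r - 1) <= p * ln r) by nra. lra.
Qed.

(* Both increment bounds come from Bernoulli's inequality at [r = x / (x + 1)]. *)
Lemma Rpower_increment_ge x p : 0 < x -> 0 <= p <= 1 ->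
  p * Rpower (x + 1) (p - 1) <= Rpower (x + 1) p - Rpower x p.
Proof.
  intros Hx Hp. set (r := x / (x + 1)).
  pose proof (Rpower_le_bernoulli r p ltac:(unfold r; apply Rdiv_lt_0_compat; lra) Hp).
  assert (E : Rpower x p = Rpower r p * Rpower (x + 1) p).
  { rewrite Rpower_mult_distr by (unfold r; try apply Rdiv_lt_0_compat; lra).
    unfold r. f_equal. field. lra. }
  rewrite E, <- Rpower_div_self by lra.
  pose proof (Rpower_pos (x + 1) p).
  assert (r - 1 = - / (x + 1)) by (unfold r; field; lra).
  assert (0 < / (x + 1)) by (apply Rinv_0_lt_compat; lra).
  unfold Rdiv. nra.
Qed.

Lemma Rpower_decrement_ge x p : 0 < x -> p <= 0 ->
  - p * Rpower (x + 1) (p - 1) <= Rpower x p - Rpower (x + 1) p.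
Proof.
  intros Hx Hp. set (r := x / (x + 1)).
  pose proof (bernoulli_le_Rpower r p ltac:(unfold r; apply Rdiv_lt_0_compat; lra) Hp).
  assert (E : Rpower x p = Rpower r p * Rpower (x + 1) p).
  { rewrite Rpower_mult_distr by (unfold r; try apply Rdiv_lt_0_compat; lra).
    unfold r. f_equal. field. lra. }
  rewrite E, <- Rpower_div_self by lra.
  pose proof (Rpower_pos (x + 1) p).
  assert (r - 1 = - / (x + 1)) by (unfold r; field; lra).
  assert (0 < / (x + 1)) by (apply Rinv_0_lt_compat; lra).
  unfold Rdiv. nra.
Qed.

Lemma ln_increment_ge x : 0 < x -> / (x + 1) <= ln (x + 1) - ln x.
Proof.
  intros Hx.
  pose proof (ln_le_sub_1 (x / (x + 1)) ltac:(apply Rdiv_lt_0_compat; lra)) as L.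
  unfold Rdiv in L. rewrite ln_mult, ln_Rinv in L by (try apply Rinv_0_lt_compat; lra).
  replace (x * / (x + 1) - 1) with (- / (x + 1)) in L by (field; lra). lra.
Qed.

Lemma sum_Rpower_opp_le th n : 0 < th < 1 -> (1 <= n)%nat ->
  (1 - th) * sumR n (fun j => Rpower (INR (S j)) (- th)) <= Rpower (INR n) (1 - th).
Proof.
  intros Hth Hn. induction n as [|n IH]; [lia|]. destruct n as [|n].
  - simpl. rewrite Rpower_1_l. replace (INR 1) with 1 by reflexivity. rewrite Rpower_1_l. lra.
  - specialize (IH ltac:(lia)). rewrite sumR_succ, Rmult_plus_distr_l.
    pose proof (INR_succ_ge_1 n).
    pose proof (Rpower_increment_ge (INR (S n)) (1 - th) ltac:(lra) ltac:(lra)) as Inc.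
    rewrite <- S_INR in Inc. replace (1 - th - 1) with (- th) in Inc by ring.
    lra.
Qed.

Lemma sum_inv_le_1_ln n : (1 <= n)%nat -> sumR n (fun j => / INR (S j)) <= 1 + ln (INR n).
Proof.
  intros Hn. induction n as [|n IH]; [lia|]. destruct n as [|n].
  - simpl. replace (INR 1) with 1 by reflexivity. rewrite ln_1. lra.
  - specialize (IH ltac:(lia)). rewrite sumR_succ.
    pose proof (INR_succ_ge_1 n).
    pose proof (ln_increment_ge (INR (S n)) ltac:(lra)) as Inc.
    rewrite <- S_INR in Inc. lra.
Qed.

Lemma sum_Rpower_opp_gt1_le b n : 1 < b ->
  sumR n (fun j => Rpower (INR (S j)) (- b)) <= b / (b - 1).
Proof.
  intros Hb.
  assert (G : forall n, (1 <= n)%nat -> (b - 1) * sumR n (fun j => Rpower (INR (S j)) (- b))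
            <= b - Rpower (INR n) (1 - b)).
  { intros k Hk. induction k as [|k IH]; [lia|]. destruct k as [|k].
    - simpl. replace (INR 1) with 1 by reflexivity. rewrite !Rpower_1_l. lra.
    - specialize (IH ltac:(lia)). rewrite sumR_succ, Rmult_plus_distr_l.
      pose proof (INR_succ_ge_1 k).
      pose proof (Rpower_decrement_ge (INR (S k)) (1 - b) ltac:(lra) ltac:(lra)) as Dec.
      rewrite <- S_INR in Dec. replace (1 - b - 1) with (- b) in Dec by ring.
      lra. }
  destruct n as [|n]; [simpl; apply Rlt_le, Rdiv_lt_0_compat; lra|].
  specialize (G (S n) ltac:(lia)). pose proof (Rpower_pos (INR (S n)) (1 - b)).
  apply Rmult_le_reg_l with (b - 1); [lra|].
  replace ((b - 1) * (b / (b - 1))) with b by (field; lra). lra.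
Qed.

Lemma sum_Rpower_opp_le_harmonic b n : b <= 1 ->
  sumR n (fun j => Rpower (INR (S j)) (- b)) <= Rpower (INR n) (1 - b) * sumR n (fun j => / INR (S j)).
Proof.
  intros Hb. rewrite <- sumR_scal. apply sumR_le. intros i Hi.
  pose proof (INR_succ_ge_1 i).
  rewrite Rpower_opp_div by lra. unfold Rdiv.
  apply Rmult_le_compat_r; [left; apply Rinv_0_lt_compat; lra|].
  apply Rle_Rpower_l; [lra|]. split; [lra|]. apply le_INR. lia.
Qed.

(** * Last-iterate bounds from suffix averages *)

(* The identity behind Shamir and Zhang's argument: the average of the last
   [k] terms is the average of the last [k + 1] terms plus a correction. *)
Lemma suffix_average_step k a0 u0 Y Sa Qs : 0 < k -> Y <= Qs ->
  (Y + Sa * u0) / k <= (a0 * u0 + (Y + Sa * u0)) / (k + 1)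
    + (/ (k * (k + 1)) * Qs + / (k + 1) * (/ k * Sa - a0) * u0).
Proof.
  intros Hk HY.
  replace ((Y + Sa * u0) / k) with ((a0 * u0 + (Y + Sa * u0)) / (k + 1)
    + (/ (k * (k + 1)) * Y + / (k + 1) * (/ k * Sa - a0) * u0)) by (field; lra).
  assert (/ (k * (k + 1)) * Y <= / (k * (k + 1)) * Qs)
    by (apply Rmult_le_compat_l; [left; apply Rinv_0_lt_compat; nra | lra]).
  lra.
Qed.

Section LastIterate.
Variables (T : nat) (a e Q : nat -> R) (es : R).
Hypothesis T_ge2 : (2 <= T)%nat.
Hypothesis suffix_bound : forall s, (1 <= s <= T)%nat ->
  sumR (T - s + 1) (fun j => a (s + j)%nat * (e (s + j)%nat - e s))
    <= sumR (T - s + 1) (fun j => Q (s + j)%nat).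

Let tail_sum n := sumR (S n) (fun j => a (T - n + j)%nat * (e (T - n + j)%nat - es)).
Let Qcorr i := / (INR (S i) * INR (S i + 1)) * sumR (S i + 1) (fun j => Q (T - S i + j)%nat).
Let Wcorr i := let k := S i in
  / INR (k + 1) * (/ INR k * sumR k (fun j => a (T - k + 1 + j)%nat) - a (T - k)%nat)
    * (e (T - k)%nat - es).

Lemma tail_sum_succ n : (n < T)%nat ->
  tail_sum (S n) = a (T - S n)%nat * (e (T - S n)%nat - es) + tail_sum n.
Proof.
  intros Hn. unfold tail_sum. rewrite sumR_shift, Nat.add_0_r. f_equal.
  apply sumR_ext. intros j Hj. replace (T - S n + S j)%nat with (T - n + j)%nat by lia.
  reflexivity.
Qed.

Lemma last_le_tail_average n : (n <= T - 1)%nat ->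
  a T * (e T - es) <= tail_sum n / INR (S n) + sumR n (fun i => Qcorr i + Wcorr i).
Proof.
  induction n as [|n IH]; intros Hn.
  - unfold tail_sum. simpl. rewrite Nat.sub_0_r, Nat.add_0_r. lra.
  - specialize (IH ltac:(lia)). rewrite sumR_succ.
    pose proof (INR_succ_ge_1 n) as Hk. set (k := S n) in *.
    set (u0 := e (T - k)%nat - es).
    set (Sa := sumR k (fun j => a (T - k + 1 + j)%nat)).
    set (Y := sumR k (fun j => a (T - k + 1 + j)%nat * (e (T - k + 1 + j)%nat - e (T - k)%nat))).
    set (Qs := sumR (k + 1) (fun j => Q (T - k + j)%nat)).
    assert (Etail : tail_sum n = Y + Sa * u0).
    { unfold tail_sum, Y, Sa. rewrite (Rmult_comm (sumR k _) u0), <- sumR_scal, <- sumR_plus.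
      apply sumR_ext. intros j Hj. replace (T - n + j)%nat with (T - k + 1 + j)%nat by lia.
      unfold u0. ring. }
    assert (HY : Y <= Qs).
    { pose proof (suffix_bound (T - k)%nat ltac:(lia)) as Hs.
      replace (T - (T - k) + 1)%nat with (S k) in Hs by lia.
      rewrite !sumR_shift, !Nat.add_0_r, Rminus_diag, Rmult_0_r, Rplus_0_l in Hs.
      unfold Qs. rewrite Nat.add_1_r, sumR_shift, Nat.add_0_r.
      replace Y with (sumR k (fun i => a (T - k + S i)%nat * (e (T - k + S i)%nat - e (T - k)%nat)));
        [lra|].
      apply sumR_ext. intros j Hj. replace (T - k + S j)%nat with (T - k + 1 + j)%nat by lia.
      reflexivity. }
    assert (Step := suffix_average_step (INR k) (a (T - k)%nat) u0 Y Sa Qs ltac:(lra) HY).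
    rewrite <- S_INR, <- Etail in Step.
    assert (EQ : Qcorr n = / (INR k * INR (S k)) * Qs)
      by (unfold Qcorr, Qs; fold k; replace (k + 1)%nat with (S k) by lia; reflexivity).
    assert (EW : Wcorr n = / INR (S k) * (/ INR k * Sa - a (T - k)%nat) * u0)
      by (unfold Wcorr, Sa, u0; fold k; replace (k + 1)%nat with (S k) by lia; reflexivity).
    assert (Et : tail_sum k = a (T - k)%nat * u0 + tail_sum n) by (apply tail_sum_succ; lia).
    rewrite Et, EQ, EW. lra.
Qed.

Lemma last_iterate_bound F :
  sumR T (fun j => a (1 + j)%nat * (e (1 + j)%nat - es)) <= F + sumR T (fun j => Q (1 + j)%nat) ->
  a T * (e T - es) <= (F + sumR T (fun j => Q (1 + j)%nat)) / INR T
    + sumR (T - 1) Qcorr + sumR (T - 1) Wcorr.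
Proof.
  intros Hfull. pose proof (last_le_tail_average (T - 1) (le_n _)) as Hlast.
  replace (S (T - 1)) with T in Hlast by lia.
  assert (Etail : tail_sum (T - 1) = sumR T (fun j => a (1 + j)%nat * (e (1 + j)%nat - es))).
  { unfold tail_sum. replace (S (T - 1)) with T by lia.
    apply sumR_ext. intros i Hi. replace (T - (T - 1) + i)%nat with (1 + i)%nat by lia. reflexivity. }
  rewrite Etail, sumR_plus in Hlast.
  assert (HT : 0 < INR T) by (apply lt_0_INR; lia).
  assert (sumR T (fun j => a (1 + j)%nat * (e (1 + j)%nat - es)) / INR T
          <= (F + sumR T (fun j => Q (1 + j)%nat)) / INR T)
    by (apply Rmult_le_compat_r; [left; apply Rinv_0_lt_compat|]; lra).
  lra.
Qed.

End LastIterate.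

(** * One step of gradient descent *)

Section GradientStep.
Variables (X : Type) (H : InnerSpace) (Kx : X -> H) (V Vd : R -> R -> R).
Variables (m : nat) (xs : nat -> X) (ys : nat -> R) (eta : nat -> R).
Hypothesis m_pos : (1 <= m)%nat.
Hypothesis V_convex : forall y, convexR (V y).
Hypothesis Vd_left_deriv : forall y a, is_left_deriv (V y) a (Vd y a).
Hypothesis eta_nonneg : forall t, 0 <= eta t.

Let f := gd Kx Vd m xs ys eta.
Let E := emp_risk Kx V m xs ys.

Definition gd_coef t j : R := Vd (ys j) (evalH Kx (gd Kx Vd m xs ys eta t) (xs j)).
Definition gd_incr t : H :=
  vscal (- (eta t * / INR m)) (vsum m (fun j => vscal (gd_coef t j) (Kx (xs j)))).

Lemma gd_one : f 1 = vzero.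
Proof. reflexivity. Qed.

Lemma gd_succ t : (1 <= t)%nat -> f (S t) = vadd (f t) (gd_incr t).
Proof. intros Ht. destruct t as [|t]; [lia | reflexivity]. Qed.

Lemma inner_gd_incr t g :
  inner g (gd_incr t) = - (eta t * / INR m) * sumR m (fun j => gd_coef t j * evalH Kx g (xs j)).
Proof.
  unfold gd_incr. rewrite inner_scal_r, inner_vsum_r. f_equal.
  apply sumR_ext. intros. rewrite inner_scal_r. reflexivity.
Qed.

Lemma inner_gd_succ t : (1 <= t)%nat ->
  inner (f (S t)) (f (S t)) = inner (f t) (f t)
    + 2 * (- (eta t * / INR m) * sumR m (fun j => gd_coef t j * evalH Kx (f t) (xs j)))
    + inner (gd_incr t) (gd_incr t).
Proof. intros Ht. rewrite (gd_succ t Ht), inner_add_add, inner_gd_incr. reflexivity. Qed.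

Lemma gd_incr_norm_le t kappa : (forall x, inner (Kx x) (Kx x) <= kappa ^ 2) ->
  inner (gd_incr t) (gd_incr t) <= eta t ^ 2 * kappa ^ 2 * / INR m * sumR m (fun j => gd_coef t j ^ 2).
Proof.
  intros HK. unfold gd_incr. rewrite inner_scal_l, inner_scal_r.
  assert (Hm : 0 < INR m) by (apply lt_0_INR; lia).
  set (S := vsum m (fun j => vscal (gd_coef t j) (Kx (xs j)))).
  assert (N : inner S S <= INR m * (kappa ^ 2 * sumR m (fun j => gd_coef t j ^ 2))).
  { eapply Rle_trans; [apply inner_vsum_le|]. apply Rmult_le_compat_l; [lra|].
    rewrite <- sumR_scal. apply sumR_le. intros j _. rewrite inner_scal_l, inner_scal_r.
    specialize (HK (xs j)). pose proof (pow2_ge_0 (gd_coef t j)). nra. }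
  set (c := eta t * / INR m).
  replace (- c * (- c * inner S S)) with (c ^ 2 * inner S S) by ring.
  replace (eta t ^ 2 * kappa ^ 2 * / INR m * sumR m (fun j => gd_coef t j ^ 2))
    with (c ^ 2 * (INR m * (kappa ^ 2 * sumR m (fun j => gd_coef t j ^ 2)))) by (unfold c; field; lra).
  apply Rmult_le_compat_l; [apply pow2_ge_0 | exact N].
Qed.

Lemma sqdist_gd_succ_le t g : (1 <= t)%nat ->
  sqdist H g (f (S t)) <= sqdist H g (f t) + 2 * eta t * (E g - E (f t)) + inner (gd_incr t) (gd_incr t).
Proof.
  intros Ht. unfold sqdist. rewrite (gd_succ t Ht), inner_add_add, inner_add_l.
  rewrite (inner_sym _ (gd_incr t) g), (inner_gd_incr t g), (inner_gd_incr t (f t)).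
  assert (Sub : sumR m (fun j => V (ys j) (evalH Kx (f t) (xs j)))
                - sumR m (fun j => V (ys j) (evalH Kx g (xs j)))
      <= sumR m (fun j => gd_coef t j * evalH Kx (f t) (xs j))
         - sumR m (fun j => gd_coef t j * evalH Kx g (xs j))).
  { rewrite <- !sumR_minus. apply sumR_le. intros j _.
    pose proof (left_deriv_subgrad (V (ys j)) (evalH Kx (f t) (xs j)) (gd_coef t j) (V_convex _) (Vd_left_deriv _ _)
                  (evalH Kx g (xs j))).
    lra. }
  assert (Hm : 0 < INR m) by (apply lt_0_INR; lia).
  assert (0 <= eta t * / INR m) by (apply Rmult_le_pos; [auto | left; apply Rinv_0_lt_compat; lra]).
  unfold E, emp_risk. set (c := eta t * / INR m) in *.
  replace (2 * eta t * (/ INR m * sumR m (fun i => V (ys i) (evalH Kx g (xs i)))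
                       - / INR m * sumR m (fun i => V (ys i) (evalH Kx (f t) (xs i)))))
    with (2 * c * (sumR m (fun i => V (ys i) (evalH Kx g (xs i)))
                   - sumR m (fun i => V (ys i) (evalH Kx (f t) (xs i)))))
    by (unfold c; ring).
  nra.
Qed.

Lemma sum_excess_risk_le g s n : (1 <= s)%nat ->
  sumR n (fun j => 2 * eta (s + j)%nat * (E (f (s + j)%nat) - E g))
    <= sqdist H g (f s) + sumR n (fun j => inner (gd_incr (s + j)) (gd_incr (s + j))).
Proof.
  intros Hs.
  enough (Hsum : sqdist H g (f (s + n)%nat) <= sqdist H g (f s)
      - sumR n (fun j => 2 * eta (s + j)%nat * (E (f (s + j)%nat) - E g))
      + sumR n (fun j => inner (gd_incr (s + j)) (gd_incr (s + j)))).
  { pose proof (sqdist_nonneg H g (f (s + n)%nat)). lra. }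
  induction n as [|n IH]; simpl sumR.
  - rewrite Nat.add_0_r. lra.
  - rewrite Nat.add_succ_r. pose proof (sqdist_gd_succ_le (s + n) g ltac:(lia)). lra.
Qed.

End GradientStep.

Lemma powr_nonneg x q : 0 <= powr x q.
Proof.
  unfold powr. destruct (Req_EM_T x 0); [destruct (Req_EM_T q 0); lra|]. left; apply Rpower_pos.
Qed.

Lemma powr_pos_eq x q : 0 < x -> powr x q = Rpower x q.
Proof. intros. unfold powr. destruct (Req_EM_T x 0); [lra | reflexivity]. Qed.

Lemma powr_le_1 x q : 0 <= x <= 1 -> 0 <= q -> powr x q <= 1.
Proof.
  intros Hx Hq. unfold powr. destruct (Req_EM_T x 0); [destruct (Req_EM_T q 0); lra|].
  rewrite <- (Rpower_1_l q). apply Rle_Rpower_l; lra.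
Qed.

Lemma powr_abs_sq_le a N q : 0 < N -> 0 <= q -> a ^ 2 <= N -> (powr (Rabs a) q) ^ 2 <= Rpower N q.
Proof.
  intros HN Hq Ha. destruct (Req_dec a 0) as [->|Ha0].
  - rewrite Rabs_R0. unfold powr. destruct (Req_EM_T 0 0) as [_|]; [|lra].
    destruct (Req_EM_T q 0) as [->|]; [rewrite Rpower_O by lra; lra|].
    pose proof (Rpower_pos N q). lra.
  - assert (Hapos : 0 < Rabs a) by (apply Rabs_pos_lt; auto).
    rewrite powr_pos_eq, <- Rpower_2, Rpower_mult by (try apply Rpower_pos; lra).
    replace (q * 2) with (2 * q) by ring. rewrite <- Rpower_mult, Rpower_2, pow2_abs by lra.
    apply Rle_Rpower_l; [lra|]. split; [nra | exact Ha].
Qed.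

Definition beta (q th : R) : R := 2 * th - q * (1 - th).

(* The constant [B] in [|f_t|^2 <= B t^(1-theta)]; for [q < 1] it is chosen so
   that [3/2 + B^q <= B]. *)
Definition iterate_norm_const (q : R) : R :=
  if Rle_dec 1 q then 1 else Rpower 4 (/ (1 - q)).

Lemma iterate_norm_const_ge_1 q : 1 <= iterate_norm_const q.
Proof.
  unfold iterate_norm_const. destruct (Rle_dec 1 q); [lra|].
  apply Rpower_ge_1; [lra|]. left. apply Rinv_0_lt_compat. lra.
Qed.

Lemma iterate_norm_const_absorbs q : 0 <= q < 1 ->
  3 / 2 + Rpower (iterate_norm_const q) q <= iterate_norm_const q.
Proof.
  intros Hq. unfold iterate_norm_const. destruct (Rle_dec 1 q); [lra|].
  assert (E : Rpower (Rpower 4 (/ (1 - q))) q = Rpower 4 (/ (1 - q)) / 4).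
  { rewrite Rpower_mult, Rpower_div_self by lra. f_equal. field. lra. }
  assert (4 <= Rpower 4 (/ (1 - q))).
  { rewrite <- (Rpower_1 4) at 1 by lra. apply Rle_Rpower; [lra|].
    apply Rmult_le_reg_l with (1 - q); [lra|]. rewrite Rinv_r; lra. }
  rewrite E. lra.
Qed.

Lemma q_mul_lt_th q th : 0 <= q -> q / (q + 1) < th -> q * (1 - th) < th.
Proof.
  intros Hq Hth. apply Rmult_lt_compat_r with (r := q + 1) in Hth; [|lra].
  unfold Rdiv in Hth. rewrite Rmult_assoc, Rinv_l in Hth by lra. nra.
Qed.

Lemma th_lt_beta q th : 0 <= q -> q / (q + 1) < th -> th < beta q th.
Proof. intros. pose proof (q_mul_lt_th q th) as Hlt. unfold beta. lra. Qed.

Section StepEstimates.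
Variables q kappa th eta1 cq V0 : R.
Hypothesis q_nonneg : 0 <= q.
Hypothesis cq_pos : 0 < cq.
Hypothesis kappa_nonneg : 0 <= kappa.
Hypothesis th_range : 0 < th < 1.
Hypothesis q_th : q / (q + 1) < th.
Hypothesis eta1_pos : 0 < eta1.
Hypothesis eta1_le : eta1 <= sqrt (1 - th) / (sqrt 2 * cq * Rpower (kappa + 1) (q + 1)).
Hypothesis eta1_V0 : 4 * V0 * eta1 <= 1 - th.
Hypothesis V0_nonneg : 0 <= V0.

Let W := Rpower (kappa + 1) (2 * (q + 1)).

Lemma eta1_cq_pow_sq_le : (eta1 * cq * Rpower (kappa + 1) (q + 1)) ^ 2 <= (1 - th) / 2.
Proof.
  pose proof (Rpower_pos (kappa + 1) (q + 1)). set (P := Rpower (kappa + 1) (q + 1)) in *.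
  assert (0 < sqrt 2) by (apply sqrt_lt_R0; lra).
  assert (L : eta1 * cq * P <= sqrt (1 - th) / sqrt 2).
  { apply Rmult_le_reg_r with (/ (cq * P)); [apply Rinv_0_lt_compat; nra|].
    replace (eta1 * cq * P * / (cq * P)) with eta1 by (field; lra).
    replace (sqrt (1 - th) / sqrt 2 * / (cq * P)) with (sqrt (1 - th) / (sqrt 2 * cq * P))
      by (field; lra). exact eta1_le. }
  assert (E : (sqrt (1 - th) / sqrt 2) ^ 2 = (1 - th) / 2).
  { unfold Rdiv. rewrite Rpow_mult_distr, pow2_sqrt, pow_inv, pow2_sqrt by lra. reflexivity. }
  rewrite <- E. apply pow_incr. split; [apply Rmult_le_pos; nra | exact L].
Qed.

Lemma eta1_cq_pow_le_1 : eta1 * cq * Rpower (kappa + 1) (q + 1) <= 1.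
Proof.
  pose proof eta1_cq_pow_sq_le. pose proof (Rpower_pos (kappa + 1) (q + 1)).
  assert (0 <= eta1 * cq * Rpower (kappa + 1) (q + 1)) by (apply Rmult_le_pos; nra).
  nra.
Qed.

Lemma eta1_cq_sq_W_le : (eta1 * cq) ^ 2 * W <= (1 - th) / 2.
Proof.
  unfold W. rewrite <- Rpower_sqr. pose proof eta1_cq_pow_sq_le. nra.
Qed.

Lemma kappa_sq_le_W : kappa ^ 2 <= W.
Proof.
  unfold W. apply Rle_trans with (Rpower (kappa + 1) 2).
  - rewrite Rpower_2 by lra. apply pow_incr. lra.
  - apply Rle_Rpower; lra.
Qed.

(* In the applications [a = f_s(x_j)], with [|f_s|^2 <= B s^(1-theta)]. *)
Lemma kappa_sq_powr_sq_le s B a : 1 <= s -> 1 <= B ->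
  a ^ 2 <= kappa ^ 2 * B * Rpower s (1 - th) ->
  kappa ^ 2 * (powr (Rabs a) q) ^ 2 <= W * Rpower B q * Rpower s (q * (1 - th)).
Proof.
  intros Hs HB Ha.
  destruct (Req_dec kappa 0) as [->|Hk0]; [rewrite pow_i by lia; rewrite Rmult_0_l;
    apply Rmult_le_pos; [apply Rmult_le_pos|]; left; apply Rpower_pos|].
  assert (Hk : 0 < kappa ^ 2) by (apply pow_lt; lra).
  pose proof (Rpower_pos s (1 - th)).
  assert (0 < kappa ^ 2 * B * Rpower s (1 - th)) by (apply Rmult_lt_0_compat; nra).
  pose proof (powr_abs_sq_le a _ q ltac:(eassumption) q_nonneg Ha) as Hp.
  rewrite <- !Rpower_mult_distr, Rpower_mult in Hp by (try apply Rmult_lt_0_compat; nra).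
  replace ((1 - th) * q) with (q * (1 - th)) in Hp by ring.
  assert (Ek : kappa ^ 2 * Rpower (kappa ^ 2) q = Rpower (kappa ^ 2) (q + 1))
    by (rewrite Rpower_plus, Rpower_1 by lra; ring).
  assert (Rpower (kappa ^ 2) (q + 1) <= W).
  { unfold W. rewrite <- (Rpower_mult (kappa + 1) 2 (q + 1)), Rpower_2 by lra.
    apply Rle_Rpower_l; [lra|]. split; [lra | apply pow_incr; lra]. }
  pose proof (Rpower_pos B q). pose proof (Rpower_pos s (q * (1 - th))).
  apply Rle_trans with (kappa ^ 2 * (Rpower (kappa ^ 2) q * Rpower B q * Rpower s (q * (1 - th)))).
  - apply Rmult_le_compat_l; lra.
  - rewrite <- !Rmult_assoc, Ek. apply Rmult_le_compat_r; [lra|]. apply Rmult_le_compat_r; lra.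
Qed.

Lemma step_sq_le s B a d : 1 <= s -> 1 <= B ->
  Rabs d <= cq * (1 + powr (Rabs a) q) ->
  a ^ 2 <= kappa ^ 2 * B * Rpower s (1 - th) ->
  (eta1 * Rpower s (- th)) ^ 2 * kappa ^ 2 * d ^ 2 <= (1 - th) * (1 + Rpower B q) * Rpower s (- beta q th).
Proof.
  intros Hs HB Hd Ha.
  pose proof (kappa_sq_powr_sq_le s B a Hs HB Ha). pose proof kappa_sq_le_W.
  pose proof (powr_nonneg (Rabs a) q). set (p := powr (Rabs a) q) in *.
  assert (Hd2 : d ^ 2 <= cq ^ 2 * (2 + 2 * p ^ 2)).
  { assert (d ^ 2 <= (cq * (1 + p)) ^ 2).
    { rewrite <- (pow2_abs d). apply pow_incr. split; [apply Rabs_pos | exact Hd]. }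
    pose proof (pow2_ge_0 (p - 1)). pose proof (pow2_ge_0 cq). nra. }
  set (Z := Rpower s (q * (1 - th))) in *.
  assert (HZ : 1 <= Z) by (apply Rpower_ge_1; [lra | apply Rmult_le_pos; lra]).
  assert (HBq : 1 <= Rpower B q) by (apply Rpower_ge_1; lra).
  assert (Key : kappa ^ 2 * (2 + 2 * p ^ 2) <= 2 * W * (1 + Rpower B q) * Z) by nra.
  assert (Es : Rpower s (- th) ^ 2 * Z = Rpower s (- beta q th)).
  { unfold Z, beta. simpl. rewrite Rmult_1_r, <- !Rpower_plus. f_equal. ring. }
  pose proof eta1_cq_sq_W_le. pose proof (Rpower_pos s (- beta q th)).
  assert (0 <= (eta1 * Rpower s (- th)) ^ 2 * kappa ^ 2)
    by (apply Rmult_le_pos; apply pow2_ge_0).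
  apply Rle_trans with ((eta1 * Rpower s (- th)) ^ 2 * kappa ^ 2 * (cq ^ 2 * (2 + 2 * p ^ 2))).
  { apply Rmult_le_compat_l; assumption. }
  replace ((eta1 * Rpower s (- th)) ^ 2 * kappa ^ 2 * (cq ^ 2 * (2 + 2 * p ^ 2)))
    with ((eta1 * cq) ^ 2 * Rpower s (- th) ^ 2 * (kappa ^ 2 * (2 + 2 * p ^ 2))) by ring.
  apply Rle_trans with ((eta1 * cq) ^ 2 * Rpower s (- th) ^ 2 * (2 * W * (1 + Rpower B q) * Z)).
  { apply Rmult_le_compat_l; [apply Rmult_le_pos; apply pow2_ge_0 | exact Key]. }
  replace ((eta1 * cq) ^ 2 * Rpower s (- th) ^ 2 * (2 * W * (1 + Rpower B q) * Z))
    with (2 * ((eta1 * cq) ^ 2 * W) * (1 + Rpower B q) * (Rpower s (- th) ^ 2 * Z)) by ring.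
  rewrite Es. apply Rmult_le_compat_r; [lra|]. apply Rmult_le_compat_r; lra.
Qed.

Lemma eta1_V0_le s : 1 <= s -> 2 * (eta1 * Rpower s (- th)) * V0 <= (1 - th) / 2 * Rpower s (- th).
Proof.
  intros Hs. pose proof (Rpower_pos s (- th)).
  replace (2 * (eta1 * Rpower s (- th)) * V0) with (2 * V0 * eta1 * Rpower s (- th)) by ring.
  apply Rmult_le_compat_r; lra.
Qed.

Section LargeExponent.
Hypothesis q_ge_1 : 1 <= q.

Lemma four_kappa_sq_le_W : 4 * kappa ^ 2 <= W.
Proof.
  unfold W. apply Rle_trans with (Rpower (kappa + 1) 4).
  - replace 4 with (INR 4) at 2 by (simpl; ring). rewrite Rpower_pow by lra.
    assert (0 <= 4 * kappa <= (kappa + 1) ^ 2) by (pose proof (pow2_ge_0 (kappa - 1)); split; nra).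
    assert ((4 * kappa) ^ 2 <= ((kappa + 1) ^ 2) ^ 2) by (apply pow_incr; lra).
    replace ((kappa + 1) ^ 4) with (((kappa + 1) ^ 2) ^ 2) by ring. nra.
  - apply Rle_Rpower; lra.
Qed.


Lemma step_sq_le_small_arg s a d : 1 <= s -> Rabs a <= 1 ->
  Rabs d <= cq * (1 + powr (Rabs a) q) ->
  (eta1 * Rpower s (- th)) ^ 2 * kappa ^ 2 * d ^ 2 <= (1 - th) / 2 * Rpower s (- th).
Proof.
  intros Hs Ha Hd.
  assert (Hp : powr (Rabs a) q <= 1) by (apply powr_le_1; [split; [apply Rabs_pos|]|]; lra).
  assert (Hd2 : d ^ 2 <= 4 * cq ^ 2).
  { rewrite <- pow2_abs. pose proof (Rabs_pos d). assert (Rabs d <= 2 * cq) by nra. nra. }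
  set (S := Rpower s (- th)). assert (HS : 0 < S <= 1) by (split; [apply Rpower_pos | apply Rpower_le_1; lra]).
  pose proof eta1_cq_sq_W_le. pose proof four_kappa_sq_le_W.
  assert (HW : (eta1 * cq) ^ 2 * (4 * kappa ^ 2) <= (1 - th) / 2)
    by (pose proof (pow2_ge_0 (eta1 * cq)); nra).
  assert (0 <= (eta1 * S) ^ 2 * kappa ^ 2) by (apply Rmult_le_pos; apply pow2_ge_0).
  apply Rle_trans with ((eta1 * S) ^ 2 * kappa ^ 2 * (4 * cq ^ 2)); [apply Rmult_le_compat_l; auto|].
  replace ((eta1 * S) ^ 2 * kappa ^ 2 * (4 * cq ^ 2)) with ((eta1 * cq) ^ 2 * (4 * kappa ^ 2) * (S * S))
    by ring.
  assert (0 <= (eta1 * cq) ^ 2 * (4 * kappa ^ 2)) by (pose proof (pow2_ge_0 (eta1 * cq)); nra).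
  nra.
Qed.

Lemma growth_factor_le s a : 1 <= s -> 1 < Rabs a -> a ^ 2 <= kappa ^ 2 * Rpower s (1 - th) ->
  eta1 * cq * kappa ^ 2 * Rpower (Rabs a) (q - 1) <= Rpower s ((q - 1) * (1 - th) / 2).
Proof.
  intros Hs Ha Ha2.
  pose proof (Rpower_pos s ((1 - th) / 2)). set (Rs := Rpower s ((1 - th) / 2)) in *.
  assert (ERs : Rs ^ 2 = Rpower s (1 - th)).
  { unfold Rs. simpl. rewrite Rmult_1_r, Rpower_sqr. f_equal. field. }
  assert (Hk : 0 < kappa).
  { destruct (Req_dec kappa 0) as [Hk0|]; [|lra].
    rewrite Hk0, pow_i, Rmult_0_l, <- pow2_abs in Ha2 by lia. nra. }
  assert (Habs : Rabs a <= kappa * Rs)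
    by (apply Rabs_le_of_sq_le; [nra | rewrite Rpow_mult_distr, ERs; exact Ha2]).
  assert (P1 : Rpower (Rabs a) (q - 1) <= Rpower kappa (q - 1) * Rpower s ((q - 1) * (1 - th) / 2)).
  { replace ((q - 1) * (1 - th) / 2) with ((1 - th) / 2 * (q - 1)) by field.
    rewrite <- Rpower_mult, Rpower_mult_distr by (try apply Rpower_pos; lra). fold Rs.
    apply Rle_Rpower_l; lra. }
  assert (Ek : kappa ^ 2 * Rpower kappa (q - 1) = Rpower kappa (q + 1))
    by (rewrite <- Rpower_2, <- Rpower_plus by lra; f_equal; ring).
  assert (Rpower kappa (q + 1) <= Rpower (kappa + 1) (q + 1)) by (apply Rle_Rpower_l; lra).
  pose proof eta1_cq_pow_le_1. pose proof (Rpower_pos kappa (q + 1)).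
  pose proof (Rpower_pos s ((q - 1) * (1 - th) / 2)). set (Zs := Rpower s ((q - 1) * (1 - th) / 2)) in *.
  assert (0 < eta1 * cq) by nra. assert (0 <= kappa ^ 2) by nra.
  assert (eta1 * cq * Rpower kappa (q + 1) <= 1).
  { apply Rle_trans with (eta1 * cq * Rpower (kappa + 1) (q + 1)); auto. apply Rmult_le_compat_l; lra. }
  apply Rle_trans with (eta1 * cq * (kappa ^ 2 * Rpower kappa (q - 1)) * Zs).
  - replace (eta1 * cq * (kappa ^ 2 * Rpower kappa (q - 1)) * Zs)
      with (eta1 * cq * kappa ^ 2 * (Rpower kappa (q - 1) * Zs)) by ring.
    apply Rmult_le_compat_l; [nra | exact P1].
  - rewrite Ek. nra.
Qed.

Lemma Rpower_growth_factor_le_1 s : 1 <= s ->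
  Rpower s (- th) * Rpower s ((q - 1) * (1 - th) / 2) <= 1.
Proof.
  intros Hs. rewrite <- Rpower_plus. apply Rpower_le_1; [lra|].
  pose proof (q_mul_lt_th q th q_nonneg q_th). nra.
Qed.

Lemma step_coef_le_large_arg s a d : 1 <= s -> 1 < Rabs a ->
  Rabs d <= cq * (1 + powr (Rabs a) q) ->
  a ^ 2 <= kappa ^ 2 * Rpower s (1 - th) ->
  eta1 * Rpower s (- th) * kappa ^ 2 * Rabs d
    <= 2 * Rabs a * (Rpower s (- th) * Rpower s ((q - 1) * (1 - th) / 2)).
Proof.
  intros Hs Ha Hd Ha2.
  pose proof (growth_factor_le s a Hs Ha Ha2) as G.
  pose proof (Rpower_pos s (- th)). pose proof (pow2_ge_0 kappa).
  set (P1 := Rpower (Rabs a) (q - 1)) in *.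
  assert (HP1 : 1 <= P1) by (apply Rpower_ge_1; lra).
  assert (Hd' : Rabs d <= 2 * cq * Rabs a * P1).
  { rewrite powr_pos_eq in Hd by lra.
    replace (Rpower (Rabs a) q) with (Rabs a * P1) in Hd
      by (unfold P1; rewrite <- (Rpower_1 (Rabs a)) at 1 by lra; rewrite <- Rpower_plus; f_equal; ring).
    assert (1 <= Rabs a * P1) by nra. nra. }
  apply Rle_trans with (2 * Rabs a * (eta1 * cq * kappa ^ 2 * P1) * Rpower s (- th)).
  - replace (2 * Rabs a * (eta1 * cq * kappa ^ 2 * P1) * Rpower s (- th))
      with (eta1 * Rpower s (- th) * kappa ^ 2 * (2 * cq * Rabs a * P1)) by ring.
    apply Rmult_le_compat_l; [apply Rmult_le_pos; [apply Rmult_le_pos|]; lra | exact Hd'].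
  - replace (2 * Rabs a * (Rpower s (- th) * Rpower s ((q - 1) * (1 - th) / 2)))
      with (2 * Rabs a * Rpower s ((q - 1) * (1 - th) / 2) * Rpower s (- th)) by ring.
    apply Rmult_le_compat_r; [lra|]. apply Rmult_le_compat_l; lra.
Qed.

(* For [q >= 1] the iterates do not drift away: near the origin steps are
   small, a step towards the origin is dominated by its own descent, and a
   step away from it is controlled by [V0]. *)
Lemma increment_le_of_q_ge_1 s a d : 1 <= s -> - (d * a) <= V0 ->
  Rabs d <= cq * (1 + powr (Rabs a) q) ->
  a ^ 2 <= kappa ^ 2 * Rpower s (1 - th) ->
  - 2 * (eta1 * Rpower s (- th)) * d * a + (eta1 * Rpower s (- th)) ^ 2 * kappa ^ 2 * d ^ 2
    <= (1 - th) * Rpower s (- th).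
Proof.
  intros Hs Hda Hd Ha2.
  pose proof (eta1_V0_le s Hs) as HV0.
  assert (T1 : - 2 * (eta1 * Rpower s (- th)) * d * a <= 2 * (eta1 * Rpower s (- th)) * V0).
  { replace (- 2 * (eta1 * Rpower s (- th)) * d * a) with (2 * (eta1 * Rpower s (- th)) * - (d * a))
      by ring.
    pose proof (Rpower_pos s (- th)). apply Rmult_le_compat_l; nra. }
  destruct (Rle_dec (Rabs a) 1) as [Hsmall|Hlarge].
  { pose proof (step_sq_le_small_arg s a d Hs Hsmall Hd). lra. }
  apply Rnot_le_lt in Hlarge.
  pose proof (step_coef_le_large_arg s a d Hs Hlarge Hd Ha2) as Hcoef.
  pose proof (Rpower_growth_factor_le_1 s Hs) as HSZ.
  pose proof (Rpower_pos s ((q - 1) * (1 - th) / 2)).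
  set (S := Rpower s (- th)) in *. set (Z := S * Rpower s ((q - 1) * (1 - th) / 2)) in *.
  assert (HS : 0 < S) by apply Rpower_pos.
  assert (HZ : 0 <= Z) by (unfold Z; apply Rmult_le_pos; lra).
  assert (Hsq : (eta1 * S) ^ 2 * kappa ^ 2 * d ^ 2
               = (eta1 * S * Rabs d) * (eta1 * S * kappa ^ 2 * Rabs d)) by (rewrite <- (pow2_abs d); ring).
  assert (0 <= eta1 * S * Rabs d) by (pose proof (Rabs_pos d); apply Rmult_le_pos; nra).
  destruct (Rle_dec (d * a) 0) as [Hout|Hin].
  - assert (Hda' : Rabs d * Rabs a <= V0) by (rewrite <- Rabs_mult, Rabs_left1; lra).
    assert ((eta1 * S) ^ 2 * kappa ^ 2 * d ^ 2 <= 2 * (eta1 * S) * V0 * Z).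
    { rewrite Hsq. apply Rle_trans with ((eta1 * S * Rabs d) * (2 * Rabs a * Z));
        [apply Rmult_le_compat_l; assumption|].
      replace (eta1 * S * Rabs d * (2 * Rabs a * Z)) with (2 * (eta1 * S) * (Rabs d * Rabs a) * Z) by ring.
      apply Rmult_le_compat_r; [lra|]. apply Rmult_le_compat_l; nra. }
    assert (2 * (eta1 * S) * V0 * Z <= 2 * (eta1 * S) * V0).
    { pose proof V0_nonneg. assert (0 <= 2 * (eta1 * S) * V0) by (apply Rmult_le_pos; nra). nra. }
    lra.
  - assert (Eda : d * a = Rabs d * Rabs a) by (rewrite <- Rabs_mult, Rabs_pos_eq; lra).
    assert (eta1 * S * kappa ^ 2 * Rabs d <= 2 * Rabs a) by (pose proof (Rabs_pos a); nra).
    assert (- 2 * (eta1 * S) * d * a + (eta1 * S) ^ 2 * kappa ^ 2 * d ^ 2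
            = (eta1 * S * Rabs d) * (eta1 * S * kappa ^ 2 * Rabs d - 2 * Rabs a))
      by (rewrite Hsq; replace (- 2 * (eta1 * S) * d * a) with (- 2 * (eta1 * S) * (d * a)) by ring;
          rewrite Eda; ring).
    assert (0 <= S) by lra. nra.
Qed.

End LargeExponent.

Lemma increment_le s a d : 1 <= s -> - (d * a) <= V0 ->
  Rabs d <= cq * (1 + powr (Rabs a) q) ->
  a ^ 2 <= kappa ^ 2 * iterate_norm_const q * Rpower s (1 - th) ->
  - 2 * (eta1 * Rpower s (- th)) * d * a + (eta1 * Rpower s (- th)) ^ 2 * kappa ^ 2 * d ^ 2
    <= (1 - th) * iterate_norm_const q * Rpower s (- th).
Proof.
  intros Hs Hda Hd Ha.
  destruct (Rle_dec 1 q) as [Hq1|Hq1].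
  - assert (EB : iterate_norm_const q = 1)
      by (unfold iterate_norm_const; destruct (Rle_dec 1 q); [reflexivity | lra]).
    rewrite EB, Rmult_1_r in *. apply increment_le_of_q_ge_1; assumption.
  - set (B := iterate_norm_const q) in *.
    pose proof (iterate_norm_const_ge_1 q) as HB. fold B in HB.
    pose proof (iterate_norm_const_absorbs q ltac:(lra)) as HBq. fold B in HBq.
    pose proof (step_sq_le s B a d Hs HB Hd Ha) as Hstep.
    assert (Rpower s (- beta q th) <= Rpower s (- th))
      by (apply Rle_Rpower; [lra|]; pose proof (th_lt_beta q th q_nonneg q_th); lra).
    pose proof (eta1_V0_le s Hs). pose proof (Rpower_pos s (- th)).
    assert (- 2 * (eta1 * Rpower s (- th)) * d * a <= 2 * (eta1 * Rpower s (- th)) * V0).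
    { replace (- 2 * (eta1 * Rpower s (- th)) * d * a) with (2 * (eta1 * Rpower s (- th)) * - (d * a))
        by ring.
      apply Rmult_le_compat_l; nra. }
    assert ((1 - th) * (1 + Rpower B q) * Rpower s (- beta q th)
            <= (1 - th) * (1 + Rpower B q) * Rpower s (- th)).
    { apply Rmult_le_compat_l; [|assumption].
      pose proof (Rpower_pos B q). apply Rmult_le_pos; lra. }
    assert ((1 - th) * (3 / 2 + Rpower B q) * Rpower s (- th) <= (1 - th) * B * Rpower s (- th))
      by (apply Rmult_le_compat_r; [lra|]; apply Rmult_le_compat_l; lra).
    nra.
Qed.
End StepEstimates.

Lemma le_of_increment_le (N : nat -> R) th B : 0 < th < 1 -> 0 <= B -> N 1%nat <= 0 ->
  (forall t, (1 <= t)%nat -> N t <= B * Rpower (INR t) (1 - th) ->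
     N (S t) <= N t + (1 - th) * B * Rpower (INR t) (- th)) ->
  forall t, (1 <= t)%nat -> N t <= B * Rpower (INR t) (1 - th).
Proof.
  intros Hth HB H1 Hstep.
  set (partial t := B * ((1 - th) * sumR (t - 1) (fun j => Rpower (INR (S j)) (- th)))).
  assert (Hpartial : forall t, (1 <= t)%nat -> partial t <= B * Rpower (INR t) (1 - th)).
  { intros t Ht. unfold partial. pose proof (Rpower_pos (INR t) (1 - th)).
    destruct (Nat.eq_dec t 1) as [->|Ht1].
    { rewrite Nat.sub_diag. simpl sumR. rewrite !Rmult_0_r. apply Rmult_le_pos; lra. }
    pose proof (sum_Rpower_opp_le th (t - 1) Hth ltac:(lia)).
    assert (Rpower (INR (t - 1)) (1 - th) <= Rpower (INR t) (1 - th))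
      by (apply Rle_Rpower_l; [lra|]; split; [apply lt_0_INR; lia | apply le_INR; lia]).
    apply Rmult_le_compat_l; lra. }
  assert (Hind : forall t, (1 <= t)%nat -> N t <= partial t).
  { induction t as [|t IH]; intros Ht; [lia|]. destruct t as [|t]; [unfold partial; simpl; lra|].
    specialize (IH ltac:(lia)).
    pose proof (Hstep (S t) ltac:(lia) (Rle_trans _ _ _ IH (Hpartial (S t) ltac:(lia)))).
    unfold partial in *. replace (S (S t) - 1)%nat with (S t) by lia.
    replace (S t - 1)%nat with t in IH by lia. rewrite sumR_succ. cbv beta. nra. }
  intros t Ht. apply Rle_trans with (partial t); auto.
Qed.

(** * The rate [Lambda_T] *)

Lemma suffix_correction_le T (Q : nat -> R) C b : 0 <= C -> 0 <= b ->
  (forall t, (1 <= t)%nat -> Q t <= C * Rpower (INR t) (- b)) ->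
  sumR (T - 1) (fun i => / (INR (S i) * INR (S i + 1)) * sumR (S i + 1) (fun j => Q (T - S i + j)%nat))
    <= C * sumR (T - 1) (fun i => / INR (S i) * Rpower (INR (T - S i)) (- b)).
Proof.
  intros HC Hb HQ. rewrite <- sumR_scal. apply sumR_le. intros i Hi.
  pose proof (INR_succ_ge_1 i).
  assert (Hk1 : INR (S i + 1) = INR (S i) + 1) by (rewrite plus_INR; simpl; ring).
  assert (0 < INR (T - S i)) by (apply lt_0_INR; lia).
  assert (Inner : sumR (S i + 1) (fun j => Q (T - S i + j)%nat)
                  <= INR (S i + 1) * (C * Rpower (INR (T - S i)) (- b))).
  { apply sumR_le_const. intros j Hj. eapply Rle_trans; [apply HQ; lia|].
    apply Rmult_le_compat_l; auto. apply Rpower_opp_antimono; [|lra].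
    split; auto. apply le_INR; lia. }
  rewrite Hk1 in *.
  apply Rle_trans with (/ (INR (S i) * (INR (S i) + 1))
                        * ((INR (S i) + 1) * (C * Rpower (INR (T - S i)) (- b)))).
  - apply Rmult_le_compat_l; auto. left; apply Rinv_0_lt_compat; nra.
  - right. field. lra.
Qed.

(* Split the sum at [k = T / 2]: for small [k], [T - k >= T / 2]; for large [k], [1/k <= 2/T]. *)
Lemma sum_inv_mul_Rpower_le T b : (1 <= T)%nat -> 0 <= b ->
  sumR (T - 1) (fun i => / INR (S i) * Rpower (INR (T - S i)) (- b))
    <= Rpower 2 b * Rpower (INR T) (- b) * sumR T (fun j => / INR (S j))
       + 2 / INR T * sumR T (fun j => Rpower (INR (S j)) (- b)).
Proof.
  intros HT Hb. set (Tr := INR T). assert (HTr : 1 <= Tr) by (unfold Tr; replace 1 with (INR 1) by reflexivity; apply le_INR; lia).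
  assert (P2 : 0 < Rpower 2 b * Rpower Tr (- b)) by (apply Rmult_lt_0_compat; apply Rpower_pos).
  assert (0 < 2 / Tr) by (apply Rdiv_lt_0_compat; lra).
  apply Rle_trans with (sumR (T - 1) (fun i => Rpower 2 b * Rpower Tr (- b) * / INR (S i)
                                            + 2 / Tr * Rpower (INR (T - S i)) (- b))).
  { apply sumR_le. intros i Hi.
    pose proof (INR_succ_ge_1 i).
    assert (0 < INR (T - S i)) by (apply lt_0_INR; lia).
    pose proof (Rpower_pos (INR (T - S i)) (- b)).
    assert (0 < / INR (S i)) by (apply Rinv_0_lt_compat; lra).
    destruct (Compare_dec.le_lt_dec (2 * S i) T) as [c|c].
    - assert (Tr / 2 <= INR (T - S i)).
      { rewrite minus_INR by lia. apply le_INR in c. rewrite mult_INR in c. replace (INR 2) with 2 in c by (simpl; ring). unfold Tr. lra. }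
      assert (Rpower (INR (T - S i)) (- b) <= Rpower 2 b * Rpower Tr (- b))
        by (rewrite <- Rpower_opp_div2 by lra; apply Rpower_opp_antimono; lra).
      assert (0 <= 2 / Tr * Rpower (INR (T - S i)) (- b)) by (apply Rmult_le_pos; lra).
      nra.
    - assert (/ INR (S i) <= 2 / Tr).
      { apply lt_INR in c. rewrite mult_INR in c. replace (INR 2) with 2 in c by (simpl; ring). fold Tr in c.
        apply Rmult_le_reg_r with (INR (S i) * Tr); [nra|].
        replace (/ INR (S i) * (INR (S i) * Tr)) with Tr by (field; lra).
        replace (2 / Tr * (INR (S i) * Tr)) with (2 * INR (S i)) by (field; lra). lra. }
      nra. }
  rewrite sumR_plus, !sumR_scal.
  assert (Hrev : sumR (T - 1) (fun i => Rpower (INR (T - S i)) (- b))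
                 = sumR (T - 1) (fun j => Rpower (INR (S j)) (- b))).
  { rewrite <- (sumR_rev (T - 1) (fun j => Rpower (INR (S j)) (- b))).
    apply sumR_ext. intros i Hi. do 3 f_equal. lia. }
  rewrite Hrev.
  assert (Hsub : forall F : nat -> R, (forall j, 0 <= F j) -> sumR (T - 1) F <= sumR T F).
  { intros F HF. replace T with (S (T - 1)) at 2 by lia. rewrite sumR_succ.
    specialize (HF (T - 1)%nat). lra. }
  apply Rplus_le_compat; apply Rmult_le_compat_l; try lra; apply Hsub; intros j.
  - left. apply Rinv_0_lt_compat, lt_0_INR. lia.
  - left. apply Rpower_pos.
Qed.

Lemma beta_sub_1 q th : 0 <= q -> beta q th - 1 = (q + 2) * (th - (q + 1) / (q + 2)).
Proof. intros. unfold beta. field. lra. Qed.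

Definition rate_const (q th : R) : R :=
  if Rlt_dec ((q + 1) / (q + 2)) th then (3 * beta q th + 8) / (beta q th - 1) else 14.

Section Rate.
Variables q th : R.
Hypothesis q_nonneg : 0 <= q.
Hypothesis th_range : 0 < th < 1.
Hypothesis q_th : q / (q + 1) < th.

Lemma LambdaT_pos T : (2 <= T)%nat -> 0 < LambdaT q th T.
Proof.
  intros HT. assert (2 <= INR T) by (replace 2 with (INR 2) by (simpl; ring); apply le_INR; lia).
  assert (0 < ln (INR T)) by (rewrite <- ln_1; apply ln_increasing; lra).
  unfold LambdaT. destruct (Rlt_dec _ _); [apply Rpower_pos|].
  destruct (Req_EM_T _ _); apply Rmult_lt_0_compat; auto; apply Rpower_pos.
Qed.

Section LargeT.
Variable T : nat.
Hypothesis T_ge3 : (3 <= T)%nat.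

Lemma INR_ge_3 : 3 <= INR T.
Proof. replace 3 with (INR 3) by (simpl; ring). apply le_INR. lia. Qed.

Lemma Rpower_opp_le_LambdaT : Rpower (INR T) (- (1 - th)) <= LambdaT q th T.
Proof.
  pose proof INR_ge_3. pose proof (ln_ge_1 _ INR_ge_3). pose proof (beta_sub_1 q th q_nonneg).
  assert (A1 := Rpower_pos (INR T) (- (1 - th))). assert (A2 := Rpower_pos (INR T) (- (th * (1 + q) - q))).
  unfold LambdaT.
  destruct (Rlt_dec ((q + 1) / (q + 2)) th); [lra|].
  destruct (Req_EM_T th ((q + 1) / (q + 2))); [nra|].
  assert (Rpower (INR T) (- (1 - th)) <= Rpower (INR T) (- (th * (1 + q) - q))).
  { apply Rle_Rpower; [lra|]. unfold beta in *. assert (th < (q + 1) / (q + 2)) by lra. nra. }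
  nra.
Qed.

Lemma rate_terms_le_LambdaT :
  3 * Rpower (INR T) (- (1 - th)) * sumR T (fun j => Rpower (INR (S j)) (- beta q th))
    + 4 * Rpower (INR T) (- (th * (1 + q) - q)) * sumR T (fun j => / INR (S j))
  <= rate_const q th * LambdaT q th T.
Proof.
  pose proof INR_ge_3. pose proof (ln_ge_1 _ INR_ge_3). pose proof (beta_sub_1 q th q_nonneg).
  pose proof (sum_inv_le_1_ln T ltac:(lia)).
  unfold rate_const, LambdaT.
  set (Tr := INR T) in *. set (b := beta q th) in *.
  set (P := sumR T (fun j => Rpower (INR (S j)) (- b))).
  set (Hm := sumR T (fun j => / INR (S j))) in *.
  set (A1 := Rpower Tr (- (1 - th))). set (A2 := Rpower Tr (- (th * (1 + q) - q))).
  assert (HHm : Hm <= 2 * ln Tr) by lra.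
  assert (HA1 : 0 < A1) by apply Rpower_pos. assert (HA2 : 0 < A2) by apply Rpower_pos.
  destruct (Rlt_dec ((q + 1) / (q + 2)) th) as [c1|c1].
  - assert (hb : 1 < b) by nra.
    assert (HP : P <= b / (b - 1)) by apply sum_Rpower_opp_gt1_le, hb.
    assert (Hln : ln Tr <= Rpower Tr (b - 1) / (b - 1)) by (apply ln_le_Rpower_div; lra).
    assert (EA : A2 * Rpower Tr (b - 1) = A1)
      by (unfold A1, A2, b, beta; rewrite <- Rpower_plus; f_equal; ring).
    assert (3 * A1 * P <= 3 * A1 * (b / (b - 1))) by (apply Rmult_le_compat_l; lra).
    assert (4 * A2 * Hm <= 4 * A2 * (2 * (Rpower Tr (b - 1) / (b - 1))))
      by (apply Rmult_le_compat_l; lra).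
    assert (3 * A1 * (b / (b - 1)) + 4 * A2 * (2 * (Rpower Tr (b - 1) / (b - 1)))
            = (3 * b + 8) / (b - 1) * A1) by (rewrite <- EA; field; lra).
    lra.
  - destruct (Req_EM_T th ((q + 1) / (q + 2))) as [c2|c2].
    + assert (hb : b = 1) by nra.
      assert (HP : P <= Hm).
      { pose proof (sum_Rpower_opp_le_harmonic b T ltac:(lra)) as HP. fold P Hm Tr in HP.
        rewrite hb, Rminus_diag, Rpower_O in HP by (apply lt_0_INR; lia). lra. }
      assert (EA : A2 = A1) by (unfold A1, A2; f_equal; rewrite c2; field; lra).
      rewrite EA. nra.
    + assert (hb : b < 1) by (assert (th < (q + 1) / (q + 2)) by lra; nra).
      pose proof (sum_Rpower_opp_le_harmonic b T ltac:(lra)) as HP. fold P Hm Tr in HP.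
      assert (EA : A1 * Rpower Tr (1 - b) = A2)
        by (unfold A1, A2, b, beta; rewrite <- Rpower_plus; f_equal; ring).
      pose proof (Rpower_pos Tr (1 - b)).
      assert (3 * A1 * P <= 3 * A1 * (Rpower Tr (1 - b) * (2 * ln Tr))).
      { apply Rmult_le_compat_l; [lra|]. eapply Rle_trans; [apply HP|]. apply Rmult_le_compat_l; lra. }
      assert (4 * A2 * Hm <= 4 * A2 * (2 * ln Tr)) by (apply Rmult_le_compat_l; lra).
      assert (3 * A1 * (Rpower Tr (1 - b) * (2 * ln Tr)) = 6 * (ln Tr * A2)) by (rewrite <- EA; ring).
      lra.
Qed.

Lemma suffix_terms_le_LambdaT (Q : nat -> R) C : 0 <= C ->
  (forall t, (1 <= t)%nat -> Q t <= C * Rpower (INR t) (- beta q th)) ->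
  Rpower (INR T) th * (sumR T (fun j => Q (1 + j)%nat) / INR T
    + sumR (T - 1) (fun i => / (INR (S i) * INR (S i + 1)) * sumR (S i + 1) (fun j => Q (T - S i + j)%nat)))
  <= C * rate_const q th * LambdaT q th T.
Proof.
  intros HC HQ. pose proof (th_lt_beta q th q_nonneg q_th) as Hb.
  pose proof INR_ge_3.
  set (b := beta q th) in *.
  pose proof (suffix_correction_le T Q C b HC ltac:(lra) HQ) as Hsuffix.
  pose proof (sum_inv_mul_Rpower_le T b ltac:(lia) ltac:(lra)) as Hsplit.
  assert (Hfull : sumR T (fun j => Q (1 + j)%nat) <= C * sumR T (fun j => Rpower (INR (S j)) (- b)))
    by (rewrite <- sumR_scal; apply sumR_le; intros; apply HQ; lia).
  pose proof rate_terms_le_LambdaT as Hrate. fold b in Hrate.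
  set (Tr := INR T) in *.
  set (P := sumR T (fun j => Rpower (INR (S j)) (- b))) in *.
  set (Hm := sumR T (fun j => / INR (S j))) in *.
  assert (E1 : Rpower Tr th / Tr = Rpower Tr (- (1 - th)))
    by (rewrite Rpower_div_self by lra; f_equal; ring).
  assert (E2 : Rpower Tr th * Rpower Tr (- b) = Rpower Tr (- (th * (1 + q) - q)))
    by (unfold b, beta; rewrite <- Rpower_plus; f_equal; ring).
  assert (H2b : Rpower 2 b <= 4).
  { replace 4 with (Rpower 2 2) by (rewrite Rpower_2 by lra; ring).
    apply Rle_Rpower; [lra|]. unfold b, beta. nra. }
  pose proof (Rpower_pos Tr th). pose proof (Rpower_pos Tr (- (th * (1 + q) - q))).
  assert (0 <= Hm) by (apply sumR_nonneg; intros; left; apply Rinv_0_lt_compat, lt_0_INR; lia).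
  apply Rle_trans with (C * (3 * Rpower Tr (- (1 - th)) * P + 4 * Rpower Tr (- (th * (1 + q) - q)) * Hm));
    [|rewrite (Rmult_assoc C); apply Rmult_le_compat_l; assumption].
  apply Rle_trans with (Rpower Tr th * (C * P / Tr + C * (Rpower 2 b * Rpower Tr (- b) * Hm + 2 / Tr * P))).
  - apply Rmult_le_compat_l; [lra|]. apply Rplus_le_compat.
    + apply Rmult_le_compat_r; [left; apply Rinv_0_lt_compat|]; lra.
    + eapply Rle_trans; [apply Hsuffix|]. apply Rmult_le_compat_l; assumption.
  - replace (Rpower Tr th * (C * P / Tr + C * (Rpower 2 b * Rpower Tr (- b) * Hm + 2 / Tr * P)))
      with (C * (3 * (Rpower Tr th / Tr) * P + Rpower 2 b * (Rpower Tr th * Rpower Tr (- b)) * Hm))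
      by (field; lra).
    rewrite E1, E2. apply Rmult_le_compat_l; [assumption|].
    apply Rplus_le_compat_l. apply Rmult_le_compat_r; [assumption|]. apply Rmult_le_compat_r; lra.
Qed.

End LargeT.
End Rate.

Arguments gd_coef {X H}.
Arguments gd_incr {X H}.

Definition step_sq_const (q th : R) : R := (1 - th) * (1 + Rpower (iterate_norm_const q) q).

(* The [1 + Rmax 0 _] form keeps the constant positive for all arguments. *)
Definition risk_const (q th eta1 : R) : R :=
  1 + Rmax 0 (step_sq_const q th * rate_const q th / (2 * eta1))
    + Rmax 0 ((3 * (1 - th) / (8 * eta1) + 2 * step_sq_const q th / eta1) / LambdaT q th 2).

Lemma risk_const_pos q th eta1 : 0 < risk_const q th eta1.
Proof.
  unfold risk_const.
  pose proof (Rmax_l 0 (step_sq_const q th * rate_const q th / (2 * eta1))).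
  pose proof (Rmax_l 0 ((3 * (1 - th) / (8 * eta1) + 2 * step_sq_const q th / eta1) / LambdaT q th 2)).
  lra.
Qed.

Lemma step_sq_const_nonneg q th : th < 1 -> 0 <= step_sq_const q th.
Proof.
  intros. unfold step_sq_const. pose proof (Rpower_pos (iterate_norm_const q) q).
  apply Rmult_le_pos; lra.
Qed.

Lemma rate_term_le_risk_const q th eta1 :
  step_sq_const q th * rate_const q th / (2 * eta1) <= risk_const q th eta1.
Proof.
  unfold risk_const.
  pose proof (Rmax_r 0 (step_sq_const q th * rate_const q th / (2 * eta1))).
  pose proof (Rmax_l 0 ((3 * (1 - th) / (8 * eta1) + 2 * step_sq_const q th / eta1) / LambdaT q th 2)).
  lra.
Qed.

Lemma initial_term_le_risk_const q th eta1 : 0 < LambdaT q th 2 ->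
  3 * (1 - th) / (8 * eta1) + 2 * step_sq_const q th / eta1 <= risk_const q th eta1 * LambdaT q th 2.
Proof.
  intros HL. unfold risk_const.
  set (Z := 3 * (1 - th) / (8 * eta1) + 2 * step_sq_const q th / eta1).
  set (L := LambdaT q th 2) in *.
  pose proof (Rmax_l 0 (step_sq_const q th * rate_const q th / (2 * eta1))).
  pose proof (Rmax_r 0 (Z / L)).
  replace Z with (Z / L * L) at 1 by (field; lra).
  assert (Z / L * L <= Rmax 0 (Z / L) * L) by (apply Rmult_le_compat_r; lra).
  nra.
Qed.

Section Descent.
Variables (X : Type) (H : InnerSpace) (Kx : X -> H) (K : X -> X -> R) (Y : R -> Prop).
Variables (V Vd : R -> R -> R) (V0 : R) (m : nat) (xs : nat -> X) (ys : nat -> R).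
Variables q kappa th eta1 cq : R.
Hypothesis K_inner : forall x x', K x x' = inner (Kx x) (Kx x').
Hypothesis V_nonneg : forall y a, 0 <= V y a.
Hypothesis V_convex : forall y, convexR (V y).
Hypothesis Vd_left_deriv : forall y a, is_left_deriv (V y) a (Vd y a).
Hypothesis m_pos : (1 <= m)%nat.
Hypothesis ys_in_Y : forall i, (i < m)%nat -> Y (ys i).
Hypothesis kappa_lub : is_lub (fun r => exists x : X, r = sqrt (K x x)) kappa.
Hypothesis V0_lub : is_lub (fun r => exists y, Y y /\ r = V y 0) V0.
Hypothesis q_nonneg : 0 <= q.
Hypothesis cq_pos : 0 < cq.
Hypothesis Vd_growth : forall y a, Y y -> Rabs (Vd y a) <= cq * (1 + powr (Rabs a) q).
Hypothesis th_range : 0 < th < 1.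
Hypothesis q_th : q / (q + 1) < th.
Hypothesis eta1_pos : 0 < eta1.
Hypothesis eta1_le : eta1 <= sqrt (1 - th) / (sqrt 2 * cq * Rpower (kappa + 1) (q + 1)).
Hypothesis eta1_V0 : 4 * V0 * eta1 <= 1 - th.

Definition step_size (t : nat) : R := eta1 * Rpower (INR t) (- th).

Local Notation f := (gd Kx Vd m xs ys step_size).
Local Notation E := (emp_risk Kx V m xs ys).
Local Notation coef := (gd_coef Kx Vd m xs ys step_size).
Local Notation incr := (gd_incr Kx Vd m xs ys step_size).
Local Notation B := (iterate_norm_const q).

Lemma INR_m_pos : 0 < INR m.
Proof. apply lt_0_INR. lia. Qed.

Lemma kappa_nonneg : 0 <= kappa.
Proof.
  destruct kappa_lub as [Hub _]. pose proof (sqrt_pos (K (xs 0%nat) (xs 0%nat))).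
  assert (sqrt (K (xs 0%nat) (xs 0%nat)) <= kappa) by (apply Hub; eauto). lra.
Qed.

Lemma Kx_norm_le x : inner (Kx x) (Kx x) <= kappa ^ 2.
Proof.
  destruct kappa_lub as [Hub _]. assert (Hs : sqrt (K x x) <= kappa) by (apply Hub; eauto).
  assert (0 <= K x x) by (rewrite K_inner; apply inner_pos).
  rewrite <- K_inner, <- (sqrt_sqrt (K x x)) by assumption. pose proof (sqrt_pos (K x x)).
  simpl. rewrite Rmult_1_r. apply Rmult_le_compat; assumption.
Qed.

Lemma V_zero_le j : (j < m)%nat -> V (ys j) 0 <= V0.
Proof. intros Hj. destruct V0_lub as [Hub _]. apply Hub. exists (ys j). auto. Qed.

Lemma V0_nonneg : 0 <= V0.
Proof. pose proof (V_zero_le 0 ltac:(lia)). pose proof (V_nonneg (ys 0%nat) 0). lra. Qed.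

Lemma step_size_nonneg t : 0 <= step_size t.
Proof. unfold step_size. pose proof (Rpower_pos (INR t) (- th)). nra. Qed.

Lemma emp_risk_nonneg g : 0 <= E g.
Proof.
  unfold emp_risk. pose proof INR_m_pos. apply Rmult_le_pos; [left; apply Rinv_0_lt_compat; lra|].
  apply sumR_nonneg. auto.
Qed.

Lemma emp_risk_zero_le : E vzero <= V0.
Proof.
  unfold emp_risk. pose proof INR_m_pos.
  assert (sumR m (fun i => V (ys i) (evalH Kx vzero (xs i))) <= INR m * V0).
  { apply sumR_le_const. intros i Hi. unfold evalH. rewrite inner_zero_l. apply V_zero_le, Hi. }
  apply Rmult_le_reg_l with (INR m); auto. rewrite <- Rmult_assoc, Rinv_r by lra. lra.
Qed.

Lemma eval_sq_le g x : (evalH Kx g x) ^ 2 <= kappa ^ 2 * inner g g.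
Proof.
  unfold evalH. pose proof (cauchy_schwarz H g (Kx x)). pose proof (Kx_norm_le x).
  pose proof (inner_pos H g). nra.
Qed.

(* [V (ys j)] is nonnegative and [coef t j] is a subgradient at [f_t (x_j)]. *)
Lemma coef_mul_eval_ge t j : (j < m)%nat -> - (coef t j * evalH Kx (f t) (xs j)) <= V0.
Proof.
  intros Hj.
  pose proof (left_deriv_subgrad (V (ys j)) (evalH Kx (f t) (xs j)) (coef t j)
                (V_convex _) (Vd_left_deriv _ _) 0).
  pose proof (V_nonneg (ys j) (evalH Kx (f t) (xs j))). pose proof (V_zero_le j Hj). lra.
Qed.

Lemma iterate_norm_le t : (1 <= t)%nat -> inner (f t) (f t) <= B * Rpower (INR t) (1 - th).
Proof.
  pose proof kappa_nonneg. pose proof V0_nonneg. pose proof INR_m_pos.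
  pose proof (iterate_norm_const_ge_1 q).
  apply (le_of_increment_le (fun t => inner (f t) (f t)) th B th_range ltac:(lra)).
  { cbv beta. rewrite gd_one, inner_zero_l. lra. }
  intros s Hs HN. cbv beta in HN |- *.
  assert (Hs1 : 1 <= INR s) by (replace 1 with (INR 1) by reflexivity; apply le_INR; lia).
  set (et := step_size s).
  assert (Hpoint : forall j, (j < m)%nat ->
    - 2 * et * coef s j * evalH Kx (f s) (xs j) + et ^ 2 * kappa ^ 2 * coef s j ^ 2
      <= (1 - th) * B * Rpower (INR s) (- th)).
  { intros j Hj. unfold et, step_size.
    apply (increment_le q kappa th eta1 cq V0); try assumption.
    - apply coef_mul_eval_ge, Hj.
    - apply Vd_growth, ys_in_Y, Hj.
    - eapply Rle_trans; [apply eval_sq_le|]. rewrite Rmult_assoc.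
      apply Rmult_le_compat_l; [apply pow2_ge_0 | exact HN]. }
  pose proof (sumR_le_const m _ _ Hpoint) as Hsum.
  rewrite sumR_plus, (sumR_scal m (et ^ 2 * kappa ^ 2)) in Hsum.
  replace (sumR m (fun i => - 2 * et * coef s i * evalH Kx (f s) (xs i)))
    with (- 2 * et * sumR m (fun j => coef s j * evalH Kx (f s) (xs j))) in Hsum
    by (rewrite <- sumR_scal; apply sumR_ext; intros; ring).
  rewrite (inner_gd_succ X H Kx Vd m xs ys step_size m_pos s Hs).
  pose proof (gd_incr_norm_le X H Kx Vd m xs ys step_size m_pos s kappa Kx_norm_le) as Hincr.
  fold et in Hincr |- *.
  set (SA := sumR m (fun j => coef s j * evalH Kx (f s) (xs j))) in *.
  set (SD := sumR m (fun j => coef s j ^ 2)) in *.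
  assert (2 * (- (et * / INR m) * SA) + et ^ 2 * kappa ^ 2 * / INR m * SD
          <= (1 - th) * B * Rpower (INR s) (- th)).
  { apply Rmult_le_reg_l with (INR m); [assumption|].
    replace (INR m * (2 * (- (et * / INR m) * SA) + et ^ 2 * kappa ^ 2 * / INR m * SD))
      with (- 2 * et * SA + et ^ 2 * kappa ^ 2 * SD) by (field; lra).
    lra. }
  lra.
Qed.

Lemma incr_sq_le t : (1 <= t)%nat ->
  inner (incr t) (incr t) <= step_sq_const q th * Rpower (INR t) (- beta q th).
Proof.
  intros Ht. pose proof kappa_nonneg. pose proof INR_m_pos.
  assert (Hs1 : 1 <= INR t) by (replace 1 with (INR 1) by reflexivity; apply le_INR; lia).
  eapply Rle_trans; [apply (gd_incr_norm_le X H Kx Vd m xs ys step_size m_pos t kappa Kx_norm_le)|].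
  assert (Hpoint : forall j, (j < m)%nat ->
    step_size t ^ 2 * kappa ^ 2 * coef t j ^ 2 <= step_sq_const q th * Rpower (INR t) (- beta q th)).
  { intros j Hj. unfold step_sq_const, step_size.
    apply (step_sq_le q kappa th eta1 cq q_nonneg cq_pos kappa_nonneg th_range eta1_pos eta1_le
             _ _ (evalH Kx (f t) (xs j))); [assumption| | |].
    - apply iterate_norm_const_ge_1.
    - apply Vd_growth, ys_in_Y, Hj.
    - eapply Rle_trans; [apply eval_sq_le|]. rewrite Rmult_assoc.
      apply Rmult_le_compat_l; [apply pow2_ge_0 | exact (iterate_norm_le t Ht)]. }
  pose proof (sumR_le_const m _ _ Hpoint) as Hsum.
  rewrite sumR_scal in Hsum.
  apply Rmult_le_reg_l with (INR m); [assumption|].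
  replace (INR m * (step_size t ^ 2 * kappa ^ 2 * / INR m * sumR m (fun j => coef t j ^ 2)))
    with (step_size t ^ 2 * kappa ^ 2 * sumR m (fun j => coef t j ^ 2)) by (field; lra).
  exact Hsum.
Qed.

Lemma suffix_risk_le T s : (1 <= s <= T)%nat ->
  sumR (T - s + 1) (fun j => 2 * step_size (s + j) * (E (f (s + j)%nat) - E (f s)))
    <= sumR (T - s + 1) (fun j => inner (incr (s + j)) (incr (s + j))).
Proof.
  intros Hs.
  pose proof (sum_excess_risk_le X H Kx V Vd m xs ys step_size m_pos V_convex Vd_left_deriv
                step_size_nonneg (f s) s (T - s + 1) ltac:(lia)) as Hsum.
  rewrite sqdist_refl, Rplus_0_l in Hsum. exact Hsum.
Qed.

Lemma full_risk_le T g :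
  sumR T (fun j => 2 * step_size (1 + j) * (E (f (1 + j)%nat) - E g))
    <= inner g g + sumR T (fun j => inner (incr (1 + j)) (incr (1 + j))).
Proof.
  pose proof (sum_excess_risk_le X H Kx V Vd m xs ys step_size m_pos V_convex Vd_left_deriv
                step_size_nonneg g 1 T (le_n 1)) as Hsum.
  rewrite (gd_one X H Kx Vd m xs ys step_size), sqdist_zero in Hsum. exact Hsum.
Qed.

Lemma step_size_1 : step_size 1 = eta1.
Proof. unfold step_size. replace (INR 1) with 1 by reflexivity. rewrite Rpower_1_l. ring. Qed.

Lemma step_size_2 : step_size 2 = eta1 / Rpower 2 th.
Proof. unfold step_size. replace (INR 2) with 2 by (simpl; ring). rewrite Rpower_Ropp. reflexivity. Qed.

Lemma Rpower_2_th_bounds : 1 <= Rpower 2 th <= 2.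
Proof.
  split; [apply Rpower_ge_1; lra|].
  rewrite <- (Rpower_1 2) at 2 by lra. apply Rle_Rpower; lra.
Qed.

Lemma second_risk_le : E (f 2) - E (f 1) <= 2 * step_sq_const q th / eta1.
Proof.
  pose proof (suffix_risk_le 2 1 ltac:(lia)) as Hstep.
  cbv beta iota zeta delta [sumR Nat.add Nat.sub] in Hstep.
  pose proof (incr_sq_le 1 (le_n 1)) as Q1. pose proof (incr_sq_le 2 ltac:(lia)) as Q2.
  pose proof (step_sq_const_nonneg q th ltac:(lra)). pose proof (th_lt_beta q th q_nonneg q_th).
  replace (INR 1) with 1 in Q1 by reflexivity. replace (INR 2) with 2 in Q2 by (simpl; ring).
  rewrite Rpower_1_l in Q1.
  assert (Rpower 2 (- beta q th) <= 1) by (apply Rpower_le_1; lra).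
  rewrite step_size_2 in Hstep. pose proof Rpower_2_th_bounds as Hp.
  set (p := Rpower 2 th) in *. set (C2 := step_sq_const q th) in *.
  apply Rmult_le_reg_l with (2 * (eta1 / p)); [apply Rmult_lt_0_compat; [|apply Rdiv_lt_0_compat]; lra|].
  replace (2 * (eta1 / p) * (2 * C2 / eta1)) with (2 * C2 * (2 / p)) by (field; lra).
  assert (1 <= 2 / p) by (apply Rmult_le_reg_r with p; [lra|]; unfold Rdiv; rewrite Rmult_assoc, Rinv_l; lra).
  nra.
Qed.

Lemma risk_last_le_T2 g c : 0 <= c ->
  E (f 2) - E g <= (inner g g / (2 * eta1) + c * E g + risk_const q th eta1) * LambdaT q th 2
    + Rpower (INR 2) th / (2 * eta1) *
      sumR (2 - 1) (fun i => let k := S i in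
        / INR (k + 1) * (/ INR k * sumR k (fun j => 2 * step_size (2 - k + 1 + j)) - 2 * step_size (2 - k))
        * (E (f (2 - k)%nat) - E g)).
Proof.
  intros Hc. cbv beta iota zeta delta [sumR Nat.add Nat.sub].
  pose proof second_risk_le as He2. rewrite (gd_one X H Kx Vd m xs ys step_size) in He2 |- *.
  pose proof emp_risk_zero_le. pose proof (emp_risk_nonneg vzero). pose proof (emp_risk_nonneg g).
  pose proof (inner_pos H g). pose proof V0_nonneg.
  pose proof (LambdaT_pos q th 2 (le_n 2)) as HL.
  pose proof (initial_term_le_risk_const q th eta1 HL).
  rewrite step_size_1, step_size_2.
  replace (INR 1) with 1 by reflexivity. replace (INR 2) with 2 by (simpl; ring).
  pose proof Rpower_2_th_bounds as Hp. set (p := Rpower 2 th) in *.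
  set (e1 := E vzero) in *. set (es := E g) in *. set (L := LambdaT q th 2) in *.
  replace (p / (2 * eta1) * (0 + / 2 * (/ 1 * (0 + 2 * (eta1 / p)) - 2 * eta1) * (e1 - es)))
    with ((1 - p) / 2 * (e1 - es)) by (field; lra).
  assert (3 * (1 - th) / (8 * eta1) = 3 / 2 * ((1 - th) / (4 * eta1))) by (field; lra).
  assert (V0 <= (1 - th) / (4 * eta1)).
  { apply Rmult_le_reg_l with (4 * eta1); [lra|].
    replace (4 * eta1 * ((1 - th) / (4 * eta1))) with (1 - th) by (field; lra). lra. }
  assert (0 <= inner g g / (2 * eta1) * L)
    by (apply Rmult_le_pos; [apply Rmult_le_pos; [|left; apply Rinv_0_lt_compat] |]; lra).
  assert (0 <= c * es * L) by (apply Rmult_le_pos; [apply Rmult_le_pos|]; lra).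
  assert ((1 + p) / 2 * e1 <= 3 / 2 * V0) by nra.
  assert (0 <= (1 + p) / 2 * es) by nra.
  lra.
Qed.

Lemma scaled_terms_le_LambdaT T F : (3 <= T)%nat -> 0 <= F ->
  Rpower (INR T) th / (2 * eta1) *
    ((F + sumR T (fun j => inner (incr (1 + j)) (incr (1 + j)))) / INR T
     + sumR (T - 1) (fun i => / (INR (S i) * INR (S i + 1))
                    * sumR (S i + 1) (fun j => inner (incr (T - S i + j)) (incr (T - S i + j)))))
  <= (F / (2 * eta1) + risk_const q th eta1) * LambdaT q th T.
Proof.
  intros HT HF.
  pose proof (suffix_terms_le_LambdaT q th q_nonneg th_range q_th T HT
                (fun t => inner (incr t) (incr t)) (step_sq_const q th)
                (step_sq_const_nonneg q th ltac:(lra)) incr_sq_le) as Hrate.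
  pose proof (Rpower_opp_le_LambdaT q th q_nonneg th_range T HT) as HA1.
  pose proof (rate_term_le_risk_const q th eta1) as HC1.
  pose proof (LambdaT_pos q th T ltac:(lia)) as HL.
  cbv beta in Hrate.
  set (SQ := sumR T _) in Hrate |- *. set (DQ := sumR (T - 1) _) in Hrate |- *.
  set (Tr := INR T) in *. set (L := LambdaT q th T) in *.
  assert (HTr : 0 < Tr) by (apply lt_0_INR; lia).
  replace (Rpower Tr th / (2 * eta1) * ((F + SQ) / Tr + DQ))
    with (F / (2 * eta1) * (Rpower Tr th / Tr) + / (2 * eta1) * (Rpower Tr th * (SQ / Tr + DQ)))
    by (field; lra).
  replace (Rpower Tr th / Tr) with (Rpower Tr (- (1 - th)))
    by (rewrite Rpower_div_self by exact HTr; f_equal; ring).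
  assert (F / (2 * eta1) * Rpower Tr (- (1 - th)) <= F / (2 * eta1) * L)
    by (apply Rmult_le_compat_l; [apply Rmult_le_pos; [|left; apply Rinv_0_lt_compat]|]; lra).
  assert (/ (2 * eta1) * (Rpower Tr th * (SQ / Tr + DQ)) <= risk_const q th eta1 * L).
  { apply Rle_trans with (step_sq_const q th * rate_const q th / (2 * eta1) * L);
      [|apply Rmult_le_compat_r; lra].
    replace (step_sq_const q th * rate_const q th / (2 * eta1) * L)
      with (/ (2 * eta1) * (step_sq_const q th * rate_const q th * L)) by (field; lra).
    apply Rmult_le_compat_l; [left; apply Rinv_0_lt_compat; lra | exact Hrate]. }
  lra.
Qed.

(* Multiply the last-iterate bound by [T^theta / (2 eta1)], the inverse of [2 eta_T]. *)
Lemma risk_last_le_ge3 T g c : (3 <= T)%nat -> 0 <= c ->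
  E (f T) - E g <= (inner g g / (2 * eta1) + c * E g + risk_const q th eta1) * LambdaT q th T
    + Rpower (INR T) th / (2 * eta1) *
      sumR (T - 1) (fun i => let k := S i in
        / INR (k + 1) * (/ INR k * sumR k (fun j => 2 * step_size (T - k + 1 + j)) - 2 * step_size (T - k))
        * (E (f (T - k)%nat) - E g)).
Proof.
  intros HT Hc.
  pose proof (last_iterate_bound T (fun t => 2 * step_size t) (fun t => E (f t))
                (fun t => inner (incr t) (incr t)) (E g) ltac:(lia) (suffix_risk_le T)
                (inner g g) (full_risk_le T g)) as Hlast.
  pose proof (scaled_terms_le_LambdaT T (inner g g) HT (inner_pos H g)) as Hterms.
  pose proof (LambdaT_pos q th T ltac:(lia)). pose proof (emp_risk_nonneg g).
  cbv beta in Hlast.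
  set (c0 := Rpower (INR T) th / (2 * eta1)) in Hterms |- *.
  assert (HTr : 0 < INR T) by (apply lt_0_INR; lia).
  assert (Hc0 : 0 < c0) by (apply Rdiv_lt_0_compat; [apply Rpower_pos | lra]).
  assert (Ec0 : c0 * (2 * step_size T) = 1).
  { unfold c0, step_size.
    replace (Rpower (INR T) th / (2 * eta1) * (2 * (eta1 * Rpower (INR T) (- th))))
      with (Rpower (INR T) th * Rpower (INR T) (- th)) by (field; lra).
    apply Rpower_mul_opp, HTr. }
  apply Rmult_le_compat_l with (r := c0) in Hlast; [|lra].
  rewrite <- Rmult_assoc, Ec0, Rmult_1_l, Rmult_plus_distr_l in Hlast.
  assert (0 <= c * E g * LambdaT q th T) by (apply Rmult_le_pos; [apply Rmult_le_pos|]; lra).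
  lra.
Qed.

Lemma risk_last_le T g c : (2 <= T)%nat -> 0 <= c ->
  E (f T) - E g <= (inner g g / (2 * eta1) + c * E g + risk_const q th eta1) * LambdaT q th T
    + Rpower (INR T) th / (2 * eta1) *
      sumR (T - 1) (fun i => let k := S i in
        / INR (k + 1) * (/ INR k * sumR k (fun j => 2 * step_size (T - k + 1 + j)) - 2 * step_size (T - k))
        * (E (f (T - k)%nat) - E g)).
Proof.
  intros HT Hc. destruct (Nat.eq_dec T 2) as [->|HT2].
  - apply risk_last_le_T2, Hc.
  - apply risk_last_le_ge3; [lia | exact Hc].
Qed.

End Descent.

Lemma cth_fun_nonneg th t : (1 <= t)%nat -> 0 <= cth_fun th t.
Proof.
  intros Ht. unfold cth_fun.
  assert (0 < ln 4) by (rewrite <- ln_1; apply ln_increasing; lra).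
  assert (1 <= INR t) by (replace 1 with (INR 1) by reflexivity; apply le_INR, Ht).
  assert (0 <= ln (INR t)).
  { destruct (Req_dec (INR t) 1) as [->|]; [rewrite ln_1; lra|].
    left. rewrite <- ln_1. apply ln_increasing; lra. }
  pose proof (Rpower_pos (INR t) (- th)).
  apply Rmult_le_pos; [apply Rmult_le_pos|]; lra.
Qed.

Theorem mainTheorem11 :
  exists C1 : R -> R -> R -> R -> R -> R,
  forall (q kappa theta eta1 cq : R),
    0 < C1 q kappa theta eta1 cq /\
    forall (X : Type) (H : InnerSpace) (Kx : X -> H) (K : X -> X -> R)
      (Y : R -> Prop) (V Vd : R -> R -> R) (V0 : R)
      (m : nat) (xs : nat -> X) (ys : nat -> R) (fstar : H) (T : nat)
      (Mth : R),
    (forall x x', K x x' = inner (Kx x) (Kx x')) ->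
    (forall y a, 0 <= V y a) ->
    (forall y a b l, 0 <= l <= 1 ->
       V y (l * a + (1 - l) * b) <= l * V y a + (1 - l) * V y b) ->
    (forall y a, is_left_deriv (V y) a (Vd y a)) ->
    (1 <= m)%nat ->
    (forall i, (i < m)%nat -> Y (ys i)) ->
    is_lub (fun r => exists x : X, r = sqrt (K x x)) kappa ->
    is_lub (fun r => exists y, Y y /\ r = V y 0) V0 ->
    0 <= q -> 0 < cq ->
    (forall y a, Y y -> Rabs (Vd y a) <= cq * (1 + powr (Rabs a) q)) ->
    0 < theta < 1 -> q / (q + 1) < theta ->
    0 < eta1 ->
    eta1 <= sqrt (1 - theta) / (sqrt 2 * cq * Rpower (kappa + 1) (q + 1)) ->
    4 * V0 * eta1 <= 1 - theta ->
    (exists t, (1 <= t)%nat /\ Mth = cth_fun theta t) ->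
    (forall t, (1 <= t)%nat -> cth_fun theta t <= Mth) ->
    (2 <= T)%nat ->
    let eta := fun t : nat => eta1 * Rpower (INR t) (- theta) in
    let f := gd Kx Vd m xs ys eta in
    let E := emp_risk Kx V m xs ys in
    let cth := / (1 - theta) * (1 + Mth) in
    E (f T) - E fstar <=
      (inner fstar fstar / (2 * eta1) + cth * E fstar + C1 q kappa theta eta1 cq)
        * LambdaT q theta T
      + Rpower (INR T) theta / (2 * eta1) *
        sumR (T - 1) (fun i =>
          let k := S i in
          / INR (k + 1) *
            (/ INR k * sumR k (fun j => 2 * eta (T - k + 1 + j)%nat) - 2 * eta (T - k)%nat)
          * (E (f (T - k)%nat) - E fstar)).
Proof.
  exists (fun q _ theta eta1 _ => risk_const q theta eta1).
  intros q kappa theta eta1 cq. split; [apply risk_const_pos|].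
  intros X H Kx K Y V Vd V0 m xs ys fstar T Mth HK HVnn Hconv Hld Hm HY Hkap HV0 hq hcq Hgrow
    hth hqth he1 R1a R1b [t0 [Ht0 HMth]] _ HT eta f E cth.
  (* Only the sign of [c'_theta] matters: the term [c'_theta E(f_star)] is slack. *)
  assert (Hcth : 0 <= cth).
  { unfold cth. pose proof (cth_fun_nonneg theta t0 Ht0).
    apply Rmult_le_pos; [left; apply Rinv_0_lt_compat|]; lra. }
  exact (risk_last_le X H Kx K Y V Vd V0 m xs ys q kappa theta eta1 cq HK HVnn Hconv Hld Hm HY
           Hkap HV0 hq hcq Hgrow hth hqth he1 R1a R1b T fstar cth HT Hcth).
Qed.
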